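(* $\mathsf{ER}^2_2$ is provable in $\mathsf{ACA}_0$.
   Context: $\mathbb{Q}$ is a fixed primitive recursive presentation of the rationals with domain $\mathbb{N}$. For a coloring $f\colon[\mathbb{Q}]^2\to 2$, a set $H$ is $i$-homogeneous if $f(x,y)=i$ for all distinct $x,y\in H$. $\mathsf{ER}^2_2$ is the statement: for every coloring $f\colon[\mathbb{Q}]^2\to 2$ there exists either an infinite $0$-homogeneous set or a $1$-homogeneous set $H$ such that $(H,\leq_\mathbb{Q})$ is a dense linear order (understood non-trivially, so that such $H$ is infinite). $\mathsf{ACA}_0$ is $\mathsf{RCA}_0$ plus the arithmetical comprehension scheme. *)

(* Semantics of second-order arithmetic (Henkin / general
   models of the language L2), the theory ACA_0, and the statement ER^2_2
   interpreted in such a model.  "ACA_0 proves phi" is rendered, via Goedel's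
   completeness theorem, as "phi holds in every (Henkin) model of ACA_0". *)

Set Implicit Arguments.

Record L2Structure := {
  num : Type;
  sets : Type;
  mem : num -> sets -> Prop;
  zero : num;
  one : num;
  add : num -> num -> num;
  mul : num -> num -> num;
  lt : num -> num -> Prop
}.

(** * Syntax of L2 (de Bruijn indices; separate indices for number and set
    variables) *)
Inductive term : Type :=
  | tvar : nat -> term
  | tzero : term
  | tone : term
  | tadd : term -> term -> term
  | tmul : term -> term -> term.

Inductive form : Type :=
  | fEq : term -> term -> form
  | fLt : term -> term -> form
  | fMem : term -> nat -> form
  | fNot : form -> form
  | fAnd : form -> form -> form
  | fOr : form -> form -> form
  | fImp : form -> form -> form
  | fAllN : form -> form
  | fExN : form -> form
  | fAllS : form -> form
  | fExS : form -> form.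

Fixpoint arithmetical (f : form) : Prop :=
  match f with
  | fEq _ _ | fLt _ _ | fMem _ _ => True
  | fNot g | fAllN g | fExN g => arithmetical g
  | fAnd g h | fOr g h | fImp g h => arithmetical g /\ arithmetical h
  | fAllS _ | fExS _ => False
  end.

Definition scons {A : Type} (a : A) (e : nat -> A) : nat -> A :=
  fun i => match i with 0 => a | S j => e j end.

Fixpoint evalt (A : L2Structure) (en : nat -> num A) (t : term) : num A :=
  match t with
  | tvar i => en i
  | tzero => zero A
  | tone => one A
  | tadd t1 t2 => add A (evalt A en t1) (evalt A en t2)
  | tmul t1 t2 => mul A (evalt A en t1) (evalt A en t2)
  end.

Fixpoint sat (A : L2Structure) (en : nat -> num A) (es : nat -> sets A)
    (f : form) : Prop :=
  match f with
  | fEq t1 t2 => evalt A en t1 = evalt A en t2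
  | fLt t1 t2 => lt A (evalt A en t1) (evalt A en t2)
  | fMem t i => mem A (evalt A en t) (es i)
  | fNot g => ~ sat A en es g
  | fAnd g h => sat A en es g /\ sat A en es h
  | fOr g h => sat A en es g \/ sat A en es h
  | fImp g h => sat A en es g -> sat A en es h
  | fAllN g => forall m : num A, sat A (scons m en) es g
  | fExN g => exists m : num A, sat A (scons m en) es g
  | fAllS g => forall X : sets A, sat A en (scons X es) g
  | fExS g => exists X : sets A, sat A en (scons X es) g
  end.

(** * Models of ACA_0 (Simpson, SOSOA, I.2.4 and I.3) *)
Definition basic_axioms (A : L2Structure) : Prop :=
  let a := add A in let m := mul A in let o := one A in let z := zero A in
  (forall n : num A, a n o <> z) /\
  (forall n k : num A, a n o = a k o -> n = k) /\
  (forall n : num A, a n z = n) /\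
  (forall n k : num A, a n (a k o) = a (a n k) o) /\
  (forall n : num A, m n z = z) /\
  (forall n k : num A, m n (a k o) = a (m n k) n) /\
  (forall n : num A, ~ lt A n z) /\
  (forall n k : num A, lt A n (a k o) <-> (lt A n k \/ n = k)).

Definition induction_axiom (A : L2Structure) : Prop :=
  forall X : sets A,
    mem A (zero A) X ->
    (forall n, mem A n X -> mem A (add A n (one A)) X) ->
    forall n, mem A n X.

Definition arithmetical_comprehension (A : L2Structure) : Prop :=
  forall (phi : form), arithmetical phi ->
  forall (en : nat -> num A) (es : nat -> sets A),
  exists X : sets A, forall n : num A, mem A n X <-> sat A (scons n en) es phi.

Definition ACA0_model (A : L2Structure) : Prop :=
  basic_axioms A /\ induction_axiom A /\ arithmetical_comprehension A.

(** * Notions used by ER^2_2, interpreted in a model (each is the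
    interpretation of an explicit arithmetical L2 formula) *)
Section InModel.
Variable A : L2Structure.

Definition le_ (x y : num A) : Prop := lt A x y \/ x = y.
Definition succ (x : num A) : num A := add A x (one A).

(* Cantor pairing: z = <x,y>  iff  2z = (x+y)(x+y+1) + 2x *)
Definition pairRel (x y z : num A) : Prop :=
  add A z z = add A (mul A (add A x y) (succ (add A x y))) (add A x x).

Definition modRel (u q r : num A) : Prop :=
  lt A r q /\ exists k, u = add A (mul A q k) r.

Definition pow2 (p : num A) : Prop :=
  forall d, (exists e, mul A d e = p) -> d = one A \/ exists h, d = add A h h.

(* The fixed primitive recursive presentation of the rationals with domain N:
   n codes the dyadic rational in (0,1) whose binary digits after the point
   are the binary digits of n+1 read from the least significant one.
   n <_Q m  iff  for some p = 2^j, n+1 = m+1 (mod p) and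
   (n+1 mod 2p) < (m+1 mod 2p). *)
Definition ltQ (n m : num A) : Prop :=
  exists p, pow2 p /\
    (exists r, modRel (succ n) p r /\ modRel (succ m) p r) /\
    exists r1 r2, modRel (succ n) (add A p p) r1 /\
                  modRel (succ m) (add A p p) r2 /\ lt A r1 r2.

(* A coloring f : [Q]^2 -> 2 is coded by a set F: f({x,y}) = 1 iff
   <min(x,y), max(x,y)> \in F (min/max w.r.t. the order of N). *)
Definition color1 (F : sets A) (x y : num A) : Prop :=
  (lt A x y /\ exists z, pairRel x y z /\ mem A z F) \/
  (lt A y x /\ exists z, pairRel y x z /\ mem A z F).

Definition homogeneous (F H : sets A) (i : bool) : Prop :=
  forall x y, mem A x H -> mem A y H -> x <> y ->
    (if i then color1 F x y else ~ color1 F x y).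

Definition infinite_set (H : sets A) : Prop :=
  forall k, exists x, mem A x H /\ lt A k x.

(* (H, <=_Q) is a dense linear order (non-trivially, i.e. H infinite) *)
Definition denseQ (H : sets A) : Prop :=
  infinite_set H /\
  forall x y, mem A x H -> mem A y H -> ltQ x y ->
    exists z, mem A z H /\ ltQ x z /\ ltQ z y.

Definition ER22 : Prop :=
  forall F : sets A,
    (exists H, infinite_set H /\ homogeneous F H false) \/
    (exists H, homogeneous F H true /\ denseQ H).
End InModel.

From Stdlib Require Import List Ring Classical.
Import ListNotations.

(* Suppose there is no infinite 0-homogeneous set.  Then some
   interval (a, b) of Q and some set Y dense in it are "good": for no y in Y is the set of z in Y with
   f(y, z) = 0 dense in any subinterval, for otherwise one could pick y_0 < y_1 < ... , each y_n
   0-coloured with all earlier ones, by repeatedly shrinking to a subinterval in which the surviving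
   points remain dense.  In a good interval a 1-homogeneous dense set is built by recursion: stage
   <i, j> + 1 picks a point of Y between the points of stages i and j which avoids the (nowhere dense)
   0-neighbourhoods of all earlier points.  Each recursion is an arithmetical definition, carried out
   in the model by gluing Goedel-beta codes of its finite initial runs with arithmetical
   comprehension; sets needed along the way (and induction instances) are obtained by reflecting the
   defining Coq propositions into L2 formulas. *)

Ltac find_idx x l :=
  lazymatch l with
  | x :: _ => constr:(O)
  | _ :: ?r => let i := find_idx x r in constr:(S i)
  end.

(* [reify_term A t nenv] and [reify_prop A P nenv senv] turn a term or proposition over the model [A]
   into an L2 term or formula; they return it together with the environments of number (and set)
   parameters, extended by the atoms met on the way. *)
Ltac reify_term A t nenv :=
  lazymatch t with
  | zero A => constr:((tzero, nenv))
  | one A => constr:((tone, nenv))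
  | add A ?a ?b =>
      let ra := reify_term A a nenv in
      lazymatch ra with (?ta, ?n1) =>
      let rb := reify_term A b n1 in
      lazymatch rb with (?tb, ?n2) => constr:((tadd ta tb, n2)) end end
  | mul A ?a ?b =>
      let ra := reify_term A a nenv in
      lazymatch ra with (?ta, ?n1) =>
      let rb := reify_term A b n1 in
      lazymatch rb with (?tb, ?n2) => constr:((tmul ta tb, n2)) end end
  | _ => match constr:(tt) with
         | _ => let i := find_idx t nenv in constr:((tvar i, nenv))
         | _ => let n' := eval cbv [List.app] in (nenv ++ [t]) in
                 let i := find_idx t n' in constr:((tvar i, n'))
         end
  end.

Ltac find_or_add x l :=
  match constr:(tt) with
  | _ => let i := find_idx x l in constr:((i, l))
  | _ => let l' := eval cbv [List.app] in (l ++ [x]) in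
          let i := find_idx x l' in constr:((i, l'))
  end.

Ltac reify_prop A P nenv senv :=
  lazymatch P with
  | @eq (num A) ?a ?b =>
      let ra := reify_term A a nenv in
      lazymatch ra with (?ta, ?n1) =>
      let rb := reify_term A b n1 in
      lazymatch rb with (?tb, ?n2) => constr:((fEq ta tb, n2, senv)) end end
  | lt A ?a ?b =>
      let ra := reify_term A a nenv in
      lazymatch ra with (?ta, ?n1) =>
      let rb := reify_term A b n1 in
      lazymatch rb with (?tb, ?n2) => constr:((fLt ta tb, n2, senv)) end end
  | mem A ?a ?X =>
      let ra := reify_term A a nenv in
      lazymatch ra with (?ta, ?n1) =>
      let rs := find_or_add X senv in
      lazymatch rs with (?i, ?s1) => constr:((fMem ta i, n1, s1)) end end
  | ~ ?Q =>
      let r := reify_prop A Q nenv senv in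
      lazymatch r with (?p, ?n1, ?s1) => constr:((fNot p, n1, s1)) end
  | ?Q /\ ?R =>
      let r := reify_prop A Q nenv senv in
      lazymatch r with (?p, ?n1, ?s1) =>
      let r2 := reify_prop A R n1 s1 in
      lazymatch r2 with (?q, ?n2, ?s2) => constr:((fAnd p q, n2, s2)) end end
  | ?Q \/ ?R =>
      let r := reify_prop A Q nenv senv in
      lazymatch r with (?p, ?n1, ?s1) =>
      let r2 := reify_prop A R n1 s1 in
      lazymatch r2 with (?q, ?n2, ?s2) => constr:((fOr p q, n2, s2)) end end
  | exists x : num A, @?Q x =>
      let y := fresh "rv" in
      let r := constr:(fun y : num A => ltac:(
                 let b := eval cbv beta in (Q y) in
                 let ne := constr:(y :: nenv) in
                 let r0 := reify_prop A b ne senv in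
                 lazymatch r0 with (?p, _ :: ?n1, ?s1) => exact (p, n1, s1) end)) in
      lazymatch r with fun _ => (?p, ?n1, ?s1) => constr:((fExN p, n1, s1)) end
  | forall x : num A, @?Q x =>
      let y := fresh "rv" in
      let r := constr:(fun y : num A => ltac:(
                 let b := eval cbv beta in (Q y) in
                 let ne := constr:(y :: nenv) in
                 let r0 := reify_prop A b ne senv in
                 lazymatch r0 with (?p, _ :: ?n1, ?s1) => exact (p, n1, s1) end)) in
      lazymatch r with fun _ => (?p, ?n1, ?s1) => constr:((fAllN p, n1, s1)) end
  | ?Q -> False =>
      let r := reify_prop A Q nenv senv in
      lazymatch r with (?p, ?n1, ?s1) => constr:((fNot p, n1, s1)) end
  | ?Q -> ?R =>
      let r := reify_prop A Q nenv senv in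
      lazymatch r with (?p, ?n1, ?s1) =>
      let r2 := reify_prop A R n1 s1 in
      lazymatch r2 with (?q, ?n2, ?s2) => constr:((fImp p q, n2, s2)) end end
  | True => constr:((fEq tzero tzero, nenv, senv))
  | False => constr:((fNot (fEq tzero tzero), nenv, senv))
  end.

Definition lenv {T} (d : T) (l : list T) : nat -> T := fun i => nth i l d.

Lemma comprehension_of_sat (A : L2Structure) (Hcomp : arithmetical_comprehension A)
  (P : num A -> Prop) phi en es :
  arithmetical phi ->
  (forall n, sat A (scons n en) es phi -> P n) ->
  (forall n, P n -> sat A (scons n en) es phi) ->
  exists X, forall n, mem A n X <-> P n.
Proof.
  intros Ha H1 H2. destruct (Hcomp phi Ha en es) as [X HX]. exists X.
  intro n. rewrite HX. split; auto.
Qed.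

Ltac comprehend_with A Hcomp d P :=
  let Pb := eval cbv beta in (forall n : num A, P n) in
  let r := reify_prop A Pb (@nil (num A)) (@nil (sets A)) in
  lazymatch r with (fAllN ?phi, ?ne, ?se) =>
    refine (@comprehension_of_sat A Hcomp P phi (lenv (zero A) ne) (lenv d se) _ _ _);
    [ cbn; tauto | intros ? Hsat; exact Hsat | intros ? Hsat; exact Hsat ]
  end.

Section ACA0Model.
Variable A : L2Structure.
Hypothesis HA : ACA0_model A.
(* A Henkin model may have no sets at all; set environments are padded with this one. *)
Variable dflt_set : sets A.

Local Notation N := (num A).
Local Notation "x + y" := (add A x y).
Local Notation "x * y" := (mul A x y).
Local Notation "0" := (zero A).
Local Notation "1" := (one A).
Local Notation "x < y" := (lt A x y).
Local Notation "x <= y" := (le_ A x y).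
Local Notation "x ∈ X" := (mem A x X) (at level 70).
Local Notation "x <Q y" := (ltQ A x y) (at level 70).

Let Hbasic : basic_axioms A := proj1 HA.
Let Hind : induction_axiom A := proj1 (proj2 HA).
Let Hcomp : arithmetical_comprehension A := proj2 (proj2 HA).

Ltac comprehend := lazymatch goal with
  |- exists X, forall n, mem A n X <-> @?P n =>
  let P' := eval cbv beta delta -[add mul zero one lt mem num sets not] in P in
  comprehend_with A Hcomp dflt_set P' end.

Lemma induction_of_set (P : N -> Prop) :
  (exists X, forall n, n ∈ X <-> P n) -> P 0 -> (forall n, P n -> P (n + 1)) -> forall n, P n.
Proof.
  intros [X HX] H0 HS. assert (forall n, n ∈ X).
  { apply Hind. apply HX; auto. intros n Hn. apply HX. apply HS. apply HX; auto. }
  intro n. apply HX. auto.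
Qed.

Ltac model_induction := lazymatch goal with |- forall n : num A, @?P n =>
  refine (induction_of_set P _ _ _); [ comprehend | cbv beta | cbv beta ] end.

(** * Arithmetic in the model *)

Lemma succ_neq_0 : forall n, n + 1 <> 0. Proof. apply Hbasic. Qed.
Lemma succ_inj : forall n k, n + 1 = k + 1 -> n = k. Proof. apply Hbasic. Qed.
Lemma add_0_r : forall n, n + 0 = n. Proof. apply Hbasic. Qed.
Lemma add_succ_r : forall n k, n + (k + 1) = (n + k) + 1. Proof. apply Hbasic. Qed.
Lemma mul_0_r : forall n, n * 0 = 0. Proof. apply Hbasic. Qed.
Lemma mul_succ_r : forall n k, n * (k + 1) = n * k + n. Proof. apply Hbasic. Qed.
Lemma nlt_0_r : forall n, ~ n < 0. Proof. apply Hbasic. Qed.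
Lemma lt_succ_r : forall n k, n < k + 1 <-> n <= k. Proof. apply Hbasic. Qed.

Lemma add_0_l : forall n, 0 + n = n.
Proof. model_induction. - apply add_0_r. - intros n IH. rewrite add_succ_r, IH. reflexivity. Qed.

Lemma add_succ_l : forall n m, (m + 1) + n = (m + n) + 1.
Proof. intro n. pattern n. revert n. model_induction.
  - intro m. rewrite !add_0_r. reflexivity.
  - intros n IH m. rewrite !add_succ_r, IH. reflexivity. Qed.

Lemma add_comm : forall n m, n + m = m + n.
Proof. intro n. pattern n. revert n. model_induction.
  - intro m. rewrite add_0_l, add_0_r. reflexivity.
  - intros n IH m. rewrite add_succ_l, add_succ_r, IH. reflexivity. Qed.

Lemma add_assoc : forall c a b, (a + b) + c = a + (b + c).
Proof. model_induction.
  - intros. rewrite !add_0_r. reflexivity.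
  - intros c IH a b. rewrite !add_succ_r, IH. reflexivity. Qed.

Lemma mul_0_l : forall n, 0 * n = 0.
Proof. model_induction. - apply mul_0_r. - intros n IH. rewrite mul_succ_r, IH, add_0_r. reflexivity. Qed.

Lemma mul_succ_l : forall n m, (m + 1) * n = m * n + n.
Proof. model_induction.
  - intro m. rewrite !mul_0_r, add_0_r. reflexivity.
  - intros n IH m. rewrite !mul_succ_r, IH.
    rewrite !add_succ_r. f_equal. rewrite !add_assoc. f_equal. apply add_comm. Qed.

Lemma mul_comm : forall n m, n * m = m * n.
Proof. model_induction.
  - intro m. rewrite mul_0_l, mul_0_r. reflexivity.
  - intros n IH m. rewrite mul_succ_l, mul_succ_r, IH. reflexivity. Qed.

Lemma mul_add_distr_l : forall c a b, a * (b + c) = a * b + a * c.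
Proof. model_induction.
  - intros. rewrite add_0_r, mul_0_r, add_0_r. reflexivity.
  - intros c IH a b. rewrite add_succ_r, !mul_succ_r, IH, add_assoc. reflexivity. Qed.

Lemma mul_assoc : forall c a b, (a * b) * c = a * (b * c).
Proof. model_induction.
  - intros. rewrite !mul_0_r. reflexivity.
  - intros c IH a b. rewrite !mul_succ_r, IH, mul_add_distr_l. reflexivity. Qed.

Lemma mul_1_l : forall n, 1 * n = n.
Proof. intro n. rewrite mul_comm. rewrite <- (add_0_l 1), mul_succ_r, mul_0_r, add_0_l. reflexivity. Qed.

Lemma model_semiring : semi_ring_theory 0 1 (add A) (mul A) (@eq N).
Proof. constructor.
  - apply add_0_l. - apply add_comm. - intros. symmetry. apply add_assoc.
  - apply mul_1_l. - apply mul_0_l. - apply mul_comm. - intros. symmetry. apply mul_assoc.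
  - intros x y z. rewrite mul_comm, mul_add_distr_l, (mul_comm z x), (mul_comm z y). reflexivity.
Qed.
Add Ring MR : model_semiring.

Lemma zero_or_succ : forall n, n = 0 \/ exists k, n = k + 1.
Proof. model_induction. - left; reflexivity. - intros n _. right. exists n. reflexivity. Qed.

Lemma add_cancel_r : forall c a b, a + c = b + c -> a = b.
Proof. model_induction.
  - intros a b. rewrite !add_0_r. auto.
  - intros c IH a b H. apply IH. apply succ_inj. rewrite <- !add_succ_r. exact H. Qed.

Lemma add_cancel_l : forall c a b, c + a = c + b -> a = b.
Proof. intros c a b H. apply (add_cancel_r c). rewrite (add_comm a), (add_comm b). exact H. Qed.

Lemma add_eq_self : forall a d, a + d = a -> d = 0.
Proof. intros a d H. apply (add_cancel_l a). rewrite add_0_r. exact H. Qed.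

Lemma lt_exists_diff : forall y x, x < y -> exists d, x + (d + 1) = y.
Proof. model_induction.
  - intros x H. exfalso. exact (nlt_0_r _ H).
  - intros y IH x H. apply lt_succ_r in H. destruct H as [H|H].
    + destruct (IH x H) as [d Hd]. exists (d + 1). rewrite <- Hd. ring.
    + subst. exists 0. ring. Qed.

Lemma lt_lt_succ_r : forall x y, x < y -> x < y + 1.
Proof. intros x y H. apply (proj2 (lt_succ_r x y)). left; auto. Qed.
Lemma lt_succ_diag_r : forall x, x < x + 1.
Proof. intros x. apply (proj2 (lt_succ_r x x)). right; auto. Qed.

Lemma lt_add_succ : forall d x, x < x + (d + 1).
Proof. model_induction.
  - intros x. rewrite add_0_l. apply lt_succ_diag_r.
  - intros d IH x. rewrite (add_succ_r x (d + 1)). apply lt_lt_succ_r. apply IH. Qed.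

Lemma lt_iff : forall x y, x < y <-> exists d, x + (d + 1) = y.
Proof. intros x y. split.
  - apply lt_exists_diff.
  - intros [d <-]. apply lt_add_succ. Qed.

Lemma lt_irrefl : forall x, ~ x < x.
Proof. intros x H. apply lt_iff in H. destruct H as [d Hd].
  apply add_eq_self in Hd. exact (succ_neq_0 _ Hd). Qed.

Lemma lt_trans : forall x y z, x < y -> y < z -> x < z.
Proof. intros x y z H1 H2. apply lt_iff in H1. apply lt_iff in H2. apply lt_iff.
  destruct H1 as [d1 <-]. destruct H2 as [d2 <-]. exists (d1 + d2 + 1). ring. Qed.

Lemma lt_asym : forall x y, x < y -> ~ y < x.
Proof. intros x y H1 H2. exact (lt_irrefl x (lt_trans _ _ _ H1 H2)). Qed.

Lemma lt_neq : forall x y, x < y -> x <> y.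
Proof. intros x y H ->. exact (lt_irrefl _ H). Qed.

Lemma le_or_gt_diff : forall y x, (exists d, x + d = y) \/ (exists d, y + (d + 1) = x).
Proof. model_induction.
  - intros x. destruct (zero_or_succ x) as [->|[k ->]].
    + left. exists 0. ring.
    + right. exists k. ring.
  - intros y IH x. destruct (IH x) as [[d Hd]|[d Hd]].
    + left. exists (d + 1). rewrite <- Hd. ring.
    + destruct (zero_or_succ d) as [->|[e ->]].
      * left. exists 0. rewrite <- Hd. ring.
      * right. exists e. rewrite <- Hd. ring. Qed.

Lemma lt_trichotomy : forall x y, x < y \/ x = y \/ y < x.
Proof. intros x y. destruct (le_or_gt_diff y x) as [[d Hd]|[d Hd]].
  - destruct (zero_or_succ d) as [->|[e ->]].
    + right; left. rewrite <- Hd. ring.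
    + left. apply lt_iff. exists e. exact Hd.
  - right; right. apply lt_iff. exists d. exact Hd. Qed.

Lemma le_iff : forall x y, x <= y <-> exists d, x + d = y.
Proof. intros x y. split.
  - intros [H| ->]. + apply lt_iff in H. destruct H as [d Hd]. exists (d+1). exact Hd.
    + exists 0. ring.
  - intros [d Hd]. destruct (zero_or_succ d) as [->|[e ->]].
    + right. rewrite <- Hd. ring.
    + left. apply lt_iff. exists e. exact Hd. Qed.

Lemma le_refl : forall x, x <= x. Proof. intros; right; reflexivity. Qed.
Lemma le_trans : forall x y z, x <= y -> y <= z -> x <= z.
Proof. intros x y z [H1| ->] [H2| ->]; try (left; eauto using lt_trans; fail); auto using le_refl.
  all: left; auto. Qed.
Lemma lt_le_trans : forall x y z, x < y -> y <= z -> x < z.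
Proof. intros x y z H [H2| ->]; eauto using lt_trans. Qed.
Lemma le_lt_trans : forall x y z, x <= y -> y < z -> x < z.
Proof. intros x y z [H| ->] H2; eauto using lt_trans. Qed.
Lemma lt_le_incl : forall x y, x < y -> x <= y. Proof. intros; left; auto. Qed.
Lemma not_lt : forall x y, ~ x < y -> y <= x.
Proof. intros x y H. destruct (lt_trichotomy x y) as [h|[h|h]]. contradiction. right; auto. left; auto. Qed.
Lemma le_not_lt : forall x y, x <= y -> ~ y < x.
Proof. intros x y [H| ->] H2. exact (lt_asym _ _ H H2). exact (lt_irrefl _ H2). Qed.
Lemma le_0_l : forall x, 0 <= x. Proof. intros x. apply le_iff. exists x. ring. Qed.
Lemma lt_iff_succ_le : forall x y, x < y <-> x + 1 <= y.
Proof. intros x y. rewrite lt_iff, le_iff. split; intros [d Hd]; exists d; rewrite <- Hd; ring. Qed.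
Lemma lt_0_succ : forall x, 0 < x + 1. Proof. intros x. apply lt_succ_r. apply le_0_l. Qed.
Lemma neq_0_lt_0 : forall x, x <> 0 -> 0 < x.
Proof. intros x H. destruct (zero_or_succ x) as [->|[k ->]]. contradiction. apply lt_0_succ. Qed.

Lemma add_lt_mono_r : forall a b c, a < b -> a + c < b + c.
Proof. intros a b c H. apply lt_iff in H. apply lt_iff. destruct H as [d <-]. exists d. ring. Qed.
Lemma add_lt_mono_r_inv : forall a b c, a + c < b + c -> a < b.
Proof. intros a b c H. destruct (lt_trichotomy a b) as [h|[<-|h]]; auto.
  exfalso; exact (lt_irrefl _ H). exfalso. exact (lt_asym _ _ H (add_lt_mono_r _ _ c h)). Qed.
Lemma le_add_r : forall a b, a <= a + b. Proof. intros a b. apply le_iff. exists b. reflexivity. Qed.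
Lemma le_add_l : forall a b, a <= b + a. Proof. intros a b. apply le_iff. exists b. ring. Qed.

Lemma mul_lt_mono_pos_r : forall a b c, a < b -> 0 < c -> a * c < b * c.
Proof. intros a b c H Hc. apply lt_iff in H. apply lt_iff in Hc. destruct H as [d <-].
  destruct Hc as [e <-]. apply lt_iff. exists (d * e + d + e). ring. Qed.
Lemma mul_le_mono_r : forall a b c, a <= b -> a * c <= b * c.
Proof. intros a b c H. apply le_iff in H. apply le_iff. destruct H as [d <-]. exists (d * c). ring. Qed.
Lemma mul_cancel_r : forall a b c, 0 < c -> a * c = b * c -> a = b.
Proof. intros a b c Hc H. destruct (lt_trichotomy a b) as [h|[h|h]]; auto.
  - exfalso. apply (lt_neq _ _ (mul_lt_mono_pos_r _ _ _ h Hc)). exact H.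
  - exfalso. apply (lt_neq _ _ (mul_lt_mono_pos_r _ _ _ h Hc)). auto. Qed.
Lemma mul_eq_0 : forall a b, a * b = 0 -> a = 0 \/ b = 0.
Proof. intros a b H. destruct (zero_or_succ a) as [->|[k ->]]; auto.
  destruct (zero_or_succ b) as [->|[l ->]]; auto. exfalso.
  assert (k * l + k + l + 1 = 0) as H' by (rewrite <- H; ring). exact (succ_neq_0 _ H'). Qed.
Lemma mul_eq_1_l : forall a b, a * b = 1 -> a = 1.
Proof. intros a b H. destruct (zero_or_succ a) as [->|[k ->]].
  - rewrite mul_0_l in H. exfalso. apply (succ_neq_0 0). rewrite add_0_l. auto.
  - destruct (zero_or_succ b) as [->|[l ->]].
    + rewrite mul_0_r in H. exfalso. apply (succ_neq_0 0). rewrite add_0_l. auto.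
    + destruct (zero_or_succ k) as [->|[m ->]]. ring.
      exfalso. assert (E : (m + 1 + 1) * (l + 1) = (m * l + m + l + l) + 1 + 1) by ring.
      rewrite H in E. assert (E2 : 0 + 1 = (m * l + m + l + l) + 1 + 1) by (rewrite add_0_l; exact E).
      apply succ_inj in E2. symmetry in E2. exact (succ_neq_0 _ E2). Qed.
Lemma le_mul_pos_r : forall a b, 0 < b -> a <= a * b.
Proof. intros a b H. apply lt_iff in H. destruct H as [d <-]. apply le_iff. exists (a * d). ring. Qed.
Lemma lt_0_1 : 0 < 1. Proof. rewrite <- (add_0_l 1). apply lt_0_succ. Qed.

Lemma least_element : forall X, (exists n, n ∈ X) -> exists n, n ∈ X /\ forall m, m < n -> ~ m ∈ X.
Proof. intros X [n0 Hn0]. apply NNPP. intro Hno.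
  assert (forall n m, m < n -> ~ m ∈ X) as K.
  { model_induction.
    - intros m H. exfalso. exact (nlt_0_r _ H).
    - intros n IH m Hm. apply lt_succ_r in Hm. destruct Hm as [Hm| ->]. auto.
      intro Hx. apply Hno. exists n. auto. }
  exact (K (n0 + 1) n0 (lt_succ_diag_r n0) Hn0). Qed.

Lemma least_number (P : N -> Prop) : (exists X, forall n, n ∈ X <-> P n) ->
  (exists n, P n) -> exists n, P n /\ forall m, m < n -> ~ P m.
Proof. intros [X HX] [n Hn]. destruct (least_element X) as [m [Hm1 Hm2]].
  exists n. apply HX; auto. exists m. split. apply HX; auto. intros k Hk Hp. apply (Hm2 k Hk). apply HX; auto. Qed.

Tactic Notation "least" constr(P) constr(H) "as" simple_intropattern(pat) :=
  destruct (least_number P ltac:(comprehend) H) as pat.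

Lemma strong_induction_of_set (P : N -> Prop) : (exists X, forall n, n ∈ X <-> P n) ->
  (forall n, (forall m, m < n -> P m) -> P n) -> forall n, P n.
Proof. intros [X HX] H n. apply NNPP. intro Hn.
  destruct (least_number (fun n => ~ n ∈ X)) as [m [Hm1 Hm2]].
  - comprehend.
  - exists n. rewrite HX. auto.
  - apply Hm1. apply HX. apply H. intros k Hk. apply NNPP. intro Hk'. apply (Hm2 k Hk). rewrite HX. auto. Qed.

Ltac strong_induction := lazymatch goal with |- forall n : num A, @?P n =>
  refine (strong_induction_of_set P _ _); [ comprehend | cbv beta ] end.

Lemma divmod_exists : forall q, 0 < q -> forall u, exists k r, r < q /\ u = q * k + r.
Proof. intros q Hq. model_induction.
  - exists 0, 0. split; auto. ring.
  - intros u [k [r [Hr ->]]]. apply lt_iff_succ_le in Hr. destruct Hr as [Hr|Hr].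
    + exists k, (r + 1). split; auto. ring.
    + exists (k + 1), 0. split; auto. rewrite <- Hr. ring. Qed.

Lemma divmod_unique : forall q k r k' r', r < q -> r' < q -> q * k + r = q * k' + r' -> k = k' /\ r = r'.
Proof.
  assert (forall q k r k' r', r < q -> r' < q -> q * k + r = q * k' + r' -> ~ k < k') as K.
  { intros q k r k' r' Hr Hr' E Hk. apply lt_iff_succ_le in Hk. apply le_iff in Hk. destruct Hk as [d <-].
    assert (q * k + r < q * k + r) as C.
    { rewrite E at 2. apply lt_le_trans with (q * k + q).
      - rewrite (add_comm (q * k) r), (add_comm (q * k) q). apply add_lt_mono_r. exact Hr.
      - apply le_iff. exists (q * d + r'). ring. }
    exact (lt_irrefl _ C). }
  intros q k r k' r' Hr Hr' E. destruct (lt_trichotomy k k') as [h|[<-|h]].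
  - exfalso. exact (K q k r k' r' Hr Hr' E h).
  - split; auto. eapply add_cancel_l; exact E.
  - exfalso. exact (K q k' r' k r Hr' Hr (eq_sym E) h). Qed.

Lemma lt_1_r : forall x, x < 1 -> x = 0.
Proof. intros x H. rewrite <- (add_0_l 1) in H. apply lt_succ_r in H. destruct H as [H|H]; auto.
  exfalso; exact (nlt_0_r _ H). Qed.

Lemma lt_2_r : forall x, x < 1 + 1 -> x = 0 \/ x = 1.
Proof. intros x H. apply lt_succ_r in H. destruct H as [H|H]; auto. left. apply lt_1_r; auto. Qed.

Definition two := 1 + 1.
Lemma lt_0_2 : 0 < two. Proof. unfold two. apply lt_0_succ. Qed.

Lemma even_or_odd : forall n, (exists h, n = h + h) \/ (exists h, n = h + h + 1).
Proof. intro n. destruct (divmod_exists two lt_0_2 n) as [k [r [Hr ->]]]. unfold two in *.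
  destruct (lt_2_r r Hr) as [->| ->]. left. exists k. ring. right. exists k. ring. Qed.

Lemma even_neq_odd : forall h k, h + h <> k + k + 1.
Proof. intros h k E. assert (two * h + 0 = two * k + 1) as E' by (unfold two; transitivity (h + h); [ring | rewrite E; ring]).
  apply divmod_unique in E'; unfold two. destruct E' as [_ E']. apply (succ_neq_0 0). rewrite add_0_l. auto.
  apply lt_0_succ. apply lt_succ_diag_r. Qed.

Definition dvd (d n : N) := exists e, d * e = n.
Definition cong (q u v : N) := exists r, modRel A u q r /\ modRel A v q r.

Lemma mod_exists : forall u q, 0 < q -> exists r, modRel A u q r.
Proof. intros u q Hq. destruct (divmod_exists q Hq u) as [k [r [Hr E]]]. exists r. split; auto. exists k; auto. Qed.
Lemma mod_unique : forall u q r r', modRel A u q r -> modRel A u q r' -> r = r'.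
Proof. intros u q r r' [H1 [k E1]] [H2 [k' E2]]. rewrite E1 in E2.
  apply divmod_unique in E2; auto. apply E2. Qed.
Lemma mod_le : forall u q r, modRel A u q r -> r <= u.
Proof. intros u q r [_ [k ->]]. apply le_iff. exists (q * k). ring. Qed.
Lemma mod_small : forall u q, u < q -> modRel A u q u.
Proof. intros u q H. split; auto. exists 0. ring. Qed.
Lemma mod1 : forall u, modRel A u 1 0.
Proof. intros u. split. apply lt_0_1. exists u. ring. Qed.
Lemma mod_add_multiple : forall u q r D, dvd q D -> modRel A u q r -> modRel A (u + D) q r.
Proof. intros u q r D [e <-] [H [k ->]]. split; auto. exists (k + e). ring. Qed.

Lemma cong_sym : forall q u v, cong q u v -> cong q v u.
Proof. intros q u v [r [H1 H2]]. exists r; auto. Qed.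
Lemma cong_trans : forall q u v w, cong q u v -> cong q v w -> cong q u w.
Proof. intros q u v w [r [H1 H2]] [r' [H3 H4]]. rewrite (mod_unique _ _ _ _ H2 H3) in H1.
  exists r'; auto. Qed.
Lemma cong_div : forall d q u v, 0 < d -> dvd d q -> cong q u v -> cong d u v.
Proof. intros d q u v Hd [e <-] [r [[H1 [k1 E1]] [H2 [k2 E2]]]].
  destruct (mod_exists r d Hd) as [s [Hs [j Ej]]]. exists s. split; split; auto.
  exists (e * k1 + j). rewrite E1, Ej. ring. exists (e * k2 + j). rewrite E2, Ej. ring. Qed.
Lemma cong_mod : forall q u v r, cong q u v -> modRel A u q r -> modRel A v q r.
Proof. intros q u v r [r' [H1 H2]] H. rewrite (mod_unique _ _ _ _ H H1). auto. Qed.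

Lemma mod_double : forall u p r2 s, 0 < p -> modRel A u (p + p) r2 -> modRel A u p s ->
  r2 = s \/ r2 = s + p.
Proof. intros u p r2 s Hp [Hr2 [k Ek]] Hs.
  destruct (lt_trichotomy r2 p) as [h|[h|h]].
  - left. apply (mod_unique u p). split; auto. exists (k + k). rewrite Ek. ring. auto.
  - right. subst r2. assert (s = 0) as ->.
    { apply (mod_unique u p). auto. split; auto. exists (k + k + 1). rewrite Ek. ring. }
    ring.
  - right. apply lt_iff in h. destruct h as [t Et]. subst r2.
    assert (s = t + 1 + 0) as ->; [|ring].
    apply (mod_unique u p). auto. split.
    + rewrite add_0_r. apply (add_lt_mono_r_inv _ _ p). rewrite (add_comm p (t + 1)) in Hr2. exact Hr2.
    + exists (k + k + 1). rewrite Ek. ring. Qed.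

Lemma mod_double_lt : forall p u v r1 r2 s, 0 < p -> cong p u v -> modRel A u (p + p) r1 ->
  modRel A v (p + p) r2 -> modRel A u p s -> r1 < r2 -> r1 = s /\ r2 = s + p.
Proof. intros p u v r1 r2 s Hp Hc H1 H2 Hs Hlt.
  assert (modRel A v p s) as Hs' by (eapply cong_mod; eauto).
  destruct (mod_double u p r1 s Hp H1 Hs) as [->| ->];
  destruct (mod_double v p r2 s Hp H2 Hs') as [->| ->].
  - exfalso; exact (lt_irrefl _ Hlt).
  - auto.
  - exfalso; apply (lt_asym _ _ Hlt). rewrite <- (add_0_r s) at 1. rewrite (add_comm s 0), (add_comm s p).
    apply add_lt_mono_r. auto.
  - exfalso; exact (lt_irrefl _ Hlt). Qed.

Lemma dvd_trans : forall a b c, dvd a b -> dvd b c -> dvd a c.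
Proof. intros a b c [e <-] [f <-]. exists (e * f). ring. Qed.
Lemma dvd_refl : forall a, dvd a a. Proof. intros a. exists 1. ring. Qed.
Lemma dvd_double : forall a, dvd a (a + a). Proof. intros a. exists two. unfold two. ring. Qed.

(** * The dense order of the rationals *)

Lemma pow2_one : pow2 A 1.
Proof. intros d [e E]. left. eapply mul_eq_1_l; eauto. Qed.

Lemma three_neq_1 : 1 + 1 + 1 <> 1.
Proof. intro E. assert (1 + 1 = 0) as E2.
  { apply succ_inj. rewrite E. rewrite add_0_l. reflexivity. }
  exact (succ_neq_0 _ E2). Qed.

Lemma pow2_pos : forall p, pow2 A p -> 0 < p.
Proof. intros p H. apply neq_0_lt_0. intros ->. destruct (H (1 + 1 + 1)) as [E|[h E]].
  - exists 0. apply mul_0_r.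
  - exact (three_neq_1 E).
  - apply (even_neq_odd h 1). rewrite <- E. reflexivity. Qed.

Lemma pow2_double : forall p, pow2 A p -> pow2 A (p + p).
Proof. intros p H d [e E]. destruct (even_or_odd d) as [[h ->]|[h ->]].
  - right. exists h; auto.
  - destruct (even_or_odd e) as [[f ->]|[f ->]].
    + apply H. exists f. apply (mul_cancel_r _ _ two lt_0_2). unfold two.
      transitivity ((h + h + 1) * (f + f)); [ring | rewrite E; ring].
    + exfalso. apply (even_neq_odd p (h * f + h * f + h + f)). rewrite <- E. ring. Qed.

Lemma pow2_half : forall p, pow2 A p -> p = 1 \/ exists q, pow2 A q /\ p = q + q.
Proof. intros p H. destruct (H p) as [E|[h E]].
  - exists 1. ring.
  - left; auto.
  - right. exists h. split; auto. intros d [e Ed]. apply H. exists (e + e). rewrite E, <- Ed. ring. Qed.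

Lemma le_1_pos : forall p, 0 < p -> p <= 1 -> p = 1.
Proof. intros p H [H1|H1]; auto. apply lt_1_r in H1. subst. exfalso; exact (lt_irrefl _ H). Qed.

Lemma lt_double : forall q, 0 < q -> q < q + q.
Proof. intros q H. rewrite <- (add_0_l q) at 1. apply add_lt_mono_r. auto. Qed.

Lemma add_lt_mono : forall a b c d, a < b -> c < d -> a + c < b + d.
Proof. intros a b c d H1 H2. apply lt_trans with (b + c). apply add_lt_mono_r; auto.
  rewrite (add_comm b c), (add_comm b d). apply add_lt_mono_r; auto. Qed.

Lemma pow2_le_dvd : forall q p, pow2 A p -> pow2 A q -> p <= q -> dvd p q.
Proof. strong_induction. intros q IH p Hp Hq Hle.
  destruct (pow2_half q Hq) as [->|[q' [Hq' ->]]].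
  - rewrite (le_1_pos p (pow2_pos p Hp) Hle). apply dvd_refl.
  - destruct (pow2_half p Hp) as [->|[p' [Hp' ->]]].
    + exists (q' + q'). ring.
    + assert (p' <= q') as Hle'.
      { apply not_lt. intro C. apply (le_not_lt _ _ Hle). apply add_lt_mono; auto. }
      destruct (IH q' (lt_double q' (pow2_pos q' Hq')) p' Hp' Hq' Hle') as [e <-].
      exists e. ring. Qed.

Lemma pow2_lt_dvd_double : forall p q, pow2 A p -> pow2 A q -> p < q -> dvd (p + p) q.
Proof. intros p q Hp Hq Hlt. apply pow2_le_dvd; auto. apply pow2_double; auto.
  destruct (pow2_le_dvd q p Hp Hq (lt_le_incl _ _ Hlt)) as [k <-].
  destruct (zero_or_succ k) as [->|[j ->]].
  - rewrite mul_0_r in Hlt. exfalso. apply (nlt_0_r _ Hlt).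
  - destruct (zero_or_succ j) as [->|[i ->]].
    + exfalso. apply (lt_irrefl p). rewrite (add_0_l 1), (mul_comm p 1), mul_1_l in Hlt. auto.
    + apply le_iff. exists (p * i). ring. Qed.

Lemma pow2_gt : forall x, exists p, pow2 A p /\ x < p.
Proof. model_induction.
  - exists 1. split. apply pow2_one. apply lt_0_1.
  - intros x [p [Hp Hx]]. exists (p + p). split. apply pow2_double; auto.
    apply lt_iff_succ_le in Hx. apply le_lt_trans with p; auto. apply lt_double. apply pow2_pos; auto. Qed.

Lemma ltQ_irrefl : forall n, ~ n <Q n.
Proof. intros n [p [Hp [_ [r1 [r2 [H1 [H2 H3]]]]]]].
  rewrite (mod_unique _ _ _ _ H1 H2) in H3. exact (lt_irrefl _ H3). Qed.

Lemma pow2_double_pos : forall p, pow2 A p -> 0 < p + p.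
Proof. intros p H. apply lt_trans with p. apply pow2_pos; auto. apply lt_double, pow2_pos; auto. Qed.

Lemma ltQ_trans : forall n m k, n <Q m -> m <Q k -> n <Q k.
Proof. intros n m k [p [Hp [Hc1 [r1 [r2 [H1 [H2 H3]]]]]]] [q [Hq [Hc2 [t1 [t2 [G1 [G2 G3]]]]]]].
  assert (Hp0 := pow2_pos p Hp). assert (Hq0 := pow2_pos q Hq).
  destruct (lt_trichotomy p q) as [h|[<-|h]].
  - assert (dvd (p + p) q) as D by (apply pow2_lt_dvd_double; auto).
    assert (cong (p + p) (m + 1) (k + 1)) as C by (eapply cong_div; eauto using pow2_double_pos).
    exists p. split; auto. split.
    + eapply cong_trans; eauto. eapply cong_div; eauto. apply dvd_double.
    + exists r1, r2. split; [exact H1| split; [eapply cong_mod; [exact C| exact H2] | exact H3]].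
  - exfalso. destruct (mod_exists (n + 1) p Hp0) as [s Hs].
    destruct (mod_double_lt p _ _ _ _ _ Hp0 Hc1 H1 H2 Hs H3) as [_ E2].
    assert (modRel A (m + 1) p s) as Hs' by (eapply cong_mod; eauto).
    destruct (mod_double_lt p _ _ _ _ _ Hp0 Hc2 G1 G2 Hs' G3) as [E1 _].
    rewrite (mod_unique _ _ _ _ H2 G1), E1 in E2.
    apply (lt_irrefl s). rewrite E2 at 2. rewrite (add_comm s p). rewrite <- (add_0_l s) at 1. apply add_lt_mono_r; auto.
  - assert (dvd (q + q) p) as D by (apply pow2_lt_dvd_double; auto).
    assert (cong (q + q) (n + 1) (m + 1)) as C by (eapply cong_div; eauto using pow2_double_pos).
    exists q. split; auto. split.
    + eapply cong_trans; eauto. eapply cong_div; eauto. apply dvd_double.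
    + exists t1, t2. split; [eapply cong_mod; [exact (cong_sym _ _ _ C)| exact G1] | split; [exact G2 | exact G3]]. Qed.

(* The witness is [n + D] for a power of two [D] beyond both codes: this appends a binary digit far
   past those of [n], moving right of [n] but not past [m]. *)
Lemma ltQ_dense : forall n m, n <Q m -> exists z, n <Q z /\ z <Q m.
Proof. intros n m [p [Hp [Hc [r1 [r2 [H1 [H2 H3]]]]]]].
  assert (Hp0 := pow2_pos p Hp).
  destruct (pow2_gt (n + 1 + (m + 1))) as [D [HD HDx]].
  assert (HD0 := pow2_pos D HD).
  assert (n + 1 < D) as L1 by (eapply le_lt_trans; [|exact HDx]; apply le_add_r).
  assert (m + 1 < D) as L2 by (eapply le_lt_trans; [|exact HDx]; apply le_add_l).
  destruct (mod_exists (n + 1) p Hp0) as [s Hs].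
  destruct (mod_double_lt p _ _ _ _ _ Hp0 Hc H1 H2 Hs H3) as [E1 E2].
  assert (p < D) as HpD.
  { eapply le_lt_trans; [|exact L2]. eapply le_trans; [|eapply mod_le; exact H2].
    rewrite E2. apply le_add_l. }
  assert (dvd (p + p) D) as DD by (apply pow2_lt_dvd_double; auto).
  exists (n + D). split.
  - exists D. split; auto. split.
    + exists (n + 1). split. apply mod_small; auto.
      replace (succ A (n + D)) with (n + 1 + D) by (unfold succ; ring). apply mod_add_multiple. apply dvd_refl. apply mod_small; auto.
    + exists (n + 1), (n + 1 + D). split; [|split].
      * apply mod_small. apply lt_trans with D; auto. apply lt_double; auto.
      * replace (succ A (n + D)) with (n + 1 + D) by (unfold succ; ring). apply mod_small. apply add_lt_mono_r; auto.
      * rewrite <- (add_0_r (n + 1)) at 1. rewrite (add_comm (n + 1) 0), (add_comm (n + 1) D). apply add_lt_mono_r; auto.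
  - assert (dvd p D) as DpD by (eapply dvd_trans; [apply dvd_double | exact DD]).
    exists p. split; auto. split.
    + eapply cong_trans; [|exact Hc]. exists s. split; auto.
      replace (succ A (n + D)) with (n + 1 + D) by (unfold succ; ring). apply mod_add_multiple; auto.
    + exists r1, r2. split; [|split; auto].
      replace (succ A (n + D)) with (n + 1 + D) by (unfold succ; ring). apply mod_add_multiple; auto. Qed.

Lemma ltQ_1_0 : 1 <Q 0.
Proof. exists 1. split. apply pow2_one. split. exists 0. split; apply mod1.
  exists 0, 1. split; [|split].
  - split. apply lt_0_succ. exists 1. unfold succ; ring.
  - split. apply lt_succ_diag_r. exists 0. unfold succ; ring.
  - apply lt_0_1. Qed.

(** * Goedel's beta coding of bounded sets, and pairing *)

Definition coprime (m n : N) := forall d, dvd d m -> dvd d n -> d = 1.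

Lemma le_gt_cases : forall x y, x <= y \/ y < x.
Proof. intros x y. destruct (lt_trichotomy x y) as [h|[h|h]]. left; left; auto. left; right; auto. right; auto. Qed.

Lemma mul_le_mono_pos_l_inv : forall m a c, 0 < m -> m * c <= m * a -> c <= a.
Proof. intros m a c Hm H. destruct (le_gt_cases c a) as [h|h]; auto. exfalso.
  apply (le_not_lt _ _ H). rewrite (mul_comm m c), (mul_comm m a). apply mul_lt_mono_pos_r; auto. Qed.

Lemma mul_cancel_l : forall m a b, 0 < m -> m * a = m * b -> a = b.
Proof. intros m a b Hm H. apply (mul_cancel_r _ _ m Hm). rewrite (mul_comm a m), (mul_comm b m). auto. Qed.

Lemma dvd_add : forall d x y, dvd d x -> dvd d y -> dvd d (x + y).
Proof. intros d x y [e <-] [f <-]. exists (e + f). ring. Qed.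
Lemma dvd_mulr : forall d x y, dvd d x -> dvd d (x * y).
Proof. intros d x y [e <-]. exists (e * y). ring. Qed.
Lemma dvd_mull : forall d x y, dvd d y -> dvd d (x * y).
Proof. intros d x y [e <-]. exists (e * x). ring. Qed.

Lemma dvd_sub : forall d x y, 0 < d -> dvd d x -> dvd d (x + y) -> dvd d y.
Proof. intros d x y Hd [e <-] [f Ef]. assert (e <= f) as Hle.
  { apply (mul_le_mono_pos_l_inv d); auto. rewrite Ef. apply le_add_r. }
  apply le_iff in Hle. destruct Hle as [g <-]. exists g.
  apply (add_cancel_l (d * e)). rewrite <- Ef. ring. Qed.

Lemma dvd_pos : forall d x, 0 < x -> dvd d x -> 0 < d.
Proof. intros d x Hx [e <-]. apply neq_0_lt_0. intros ->. rewrite mul_0_l in Hx. exact (lt_irrefl _ Hx). Qed.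

Lemma dvd_one : forall d, dvd d 1 -> d = 1.
Proof. intros d [e E]. eapply mul_eq_1_l; eauto. Qed.

Lemma lt_add_pos_r : forall a b, 0 < b -> a < a + b.
Proof. intros a b H. rewrite <- (add_0_r a) at 1. rewrite (add_comm a 0), (add_comm a b). apply add_lt_mono_r; auto. Qed.

Lemma gauss_aux : forall s m n a c, m + n = s -> 0 < m -> coprime m n -> n * a = m * c -> dvd m a.
Proof. strong_induction. intros s IH m n a c Es Hm Hco E.
  destruct (zero_or_succ n) as [->|[n0 En]].
  - assert (m = 1) as ->. { apply Hco. apply dvd_refl. exists 0. apply mul_0_r. }
    exists a. ring.
  - assert (Hn : 0 < n) by (rewrite En; apply lt_0_succ). clear n0 En.
    destruct (le_gt_cases m n) as [h|h].
    + apply le_iff in h. destruct h as [n' <-].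
      assert (a <= c) as Hac.
      { apply (mul_le_mono_pos_l_inv m); auto. rewrite <- E. replace ((m + n') * a) with (m * a + n' * a) by ring.
        apply le_add_r. }
      apply le_iff in Hac. destruct Hac as [c' <-].
      apply (IH (m + n') ) with (n := n') (c := c'); auto.
      * rewrite <- Es. replace (m + (m + n')) with ((m + n') + m) by ring. apply lt_add_pos_r; auto.
      * intros d H1 H2. apply Hco; auto. apply dvd_add; auto.
      * apply (add_cancel_l (m * a)). transitivity ((m + n') * a); [ring|]. rewrite E. ring.
    + apply lt_iff in h. destruct h as [m' Em]. remember (m' + 1) as m'' eqn:Em''.
      assert (0 < m'') as Hm'' by (rewrite Em''; apply lt_0_succ). clear m' Em''. rename m'' into m'.
      subst m.
      assert (c <= a) as Hca.
      { apply (mul_le_mono_pos_l_inv n); auto. rewrite E. replace ((n + m') * c) with (n * c + m' * c) by ring.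
        apply le_add_r. }
      apply le_iff in Hca. destruct Hca as [a' <-].
      assert (dvd n c) as [e <-].
      { apply (IH (n + m')) with (n := m') (c := a'); auto.
        * rewrite <- Es. replace (n + m' + n) with ((n + m') + n) by ring. apply lt_add_pos_r; auto.
        * intros d H1 H2. apply Hco; auto. apply dvd_add; auto.
        * apply (add_cancel_l (n * c)). transitivity ((n + m') * c); [ring|]. rewrite <- E. ring. }
      exists e.
      apply (mul_cancel_l n); auto. rewrite E. ring. Qed.

Lemma gauss : forall m n a, 0 < m -> coprime m n -> dvd m (n * a) -> dvd m a.
Proof. intros m n a Hm Hco [c Ec]. eapply (gauss_aux (m + n) m n a c); eauto. Qed.

Definition beta_mod (b y : N) := 1 + (y + 1) * b.
Definition beta_mem (a b M y : N) := y <= M /\ dvd (beta_mod b y) a.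
Definition beta_base (b M : N) := 0 < b /\ forall e, 0 < e -> e <= M -> dvd e b.

Lemma beta_base_exists : forall M, exists b, beta_base b M.
Proof. model_induction.
  - exists 1. split. apply lt_0_1. intros e He Hle. exfalso. apply (le_not_lt _ _ Hle He).
  - intros M [b [Hb Hd]]. exists (b * (M + 1)). split.
    + rewrite <- (mul_0_r b). rewrite (mul_comm b 0), (mul_comm b (M + 1)). apply mul_lt_mono_pos_r; auto. apply lt_0_succ.
    + intros e He Hle. destruct Hle as [Hle| ->].
      * apply lt_succ_r in Hle. apply dvd_mulr. apply Hd; auto.
      * apply dvd_mull. apply dvd_refl. Qed.

Lemma beta_mod_pos : forall b y, 0 < beta_mod b y.
Proof. intros b y. unfold beta_mod. rewrite add_comm. apply lt_0_succ. Qed.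

Lemma coprime_sym : forall m n, coprime m n -> coprime n m.
Proof. intros m n H d H1 H2. apply H; auto. Qed.

Lemma beta_mod_coprime_lt : forall b M y z, beta_base b M -> y < z -> z <= M -> coprime (beta_mod b y) (beta_mod b z).
Proof. intros b M y z [Hb Hv] Hyz HzM d Hdy Hdz.
  apply lt_iff in Hyz. destruct Hyz as [e <-].
  assert (Hd : 0 < d) by (eapply dvd_pos; [apply beta_mod_pos|exact Hdy]).
  assert (dvd d (b * (e + 1))) as H1.
  { apply (dvd_sub d (beta_mod b y)); auto. replace (beta_mod b y + b * (e + 1)) with (beta_mod b (y + (e + 1))); auto.
    unfold beta_mod. ring. }
  assert (coprime d b) as Hcop.
  { intros f Hf1 Hf2. apply dvd_one. apply (dvd_sub f ((y + 1) * b)).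
    - eapply dvd_pos; [exact Hb | exact Hf2].
    - apply dvd_mull; auto.
    - replace ((y + 1) * b + 1) with (beta_mod b y) by (unfold beta_mod; ring). exact (dvd_trans _ _ _ Hf1 Hdy). }
  apply Hcop. apply dvd_refl.
  apply dvd_trans with (e + 1). apply gauss with b; auto.
  apply Hv. apply lt_0_succ. eapply le_trans; [|exact HzM]. apply le_add_l. Qed.

Lemma beta_mod_coprime : forall b M y z, beta_base b M -> y <= M -> z <= M -> y <> z -> coprime (beta_mod b y) (beta_mod b z).
Proof. intros b M y z Hv Hy Hz Hne. destruct (lt_trichotomy y z) as [h|[h|h]].
  - eapply beta_mod_coprime_lt; eauto.
  - contradiction.
  - apply coprime_sym. eapply beta_mod_coprime_lt; eauto. Qed.

Lemma beta_mod_ndvd_1 : forall b y, 0 < b -> ~ dvd (beta_mod b y) 1.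
Proof. intros b y Hb H. apply dvd_one in H. unfold beta_mod in H.
  assert ((y + 1) * b = 0) as E. { apply (add_cancel_l 1). rewrite H. ring. }
  apply mul_eq_0 in E. destruct E as [E|E]. exact (succ_neq_0 _ E). rewrite E in Hb. exact (lt_irrefl _ Hb). Qed.

Lemma beta_code : forall X K, exists a b M, forall y, beta_mem a b M y <-> (y <= K /\ y ∈ X).
Proof. intros X K. destruct (beta_base_exists K) as [b Hb].
  assert (forall k, exists a, forall y, y <= K -> (dvd (beta_mod b y) a -> y < k /\ y ∈ X) /\
                                             (y < k /\ y ∈ X -> dvd (beta_mod b y) a)) as Hk.
  { model_induction.
    - exists 1. intros y Hy. split.
      + intro H. exfalso. exact (beta_mod_ndvd_1 b y (proj1 Hb) H).
      + intros [H _]. exfalso. exact (nlt_0_r _ H).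
    - intros k [a Ha]. destruct (classic (k ∈ X /\ k <= K)) as [[Hk1 Hk2]|Hk].
      + exists (a * beta_mod b k). intros y Hy. split.
        * intro H. destruct (classic (y = k)) as [->|Hne].
          -- split; auto. apply lt_succ_diag_r.
          -- assert (dvd (beta_mod b y) a) as H'.
             { apply gauss with (beta_mod b k). apply beta_mod_pos. eapply beta_mod_coprime; eauto.
               rewrite mul_comm; auto. }
             destruct (proj1 (Ha y Hy) H') as [H1 H2]. split; auto. apply lt_lt_succ_r; auto.
        * intros [H1 H2]. apply lt_succ_r in H1. destruct H1 as [H1| ->].
          -- apply dvd_mulr. apply (proj2 (Ha y Hy)). auto.
          -- apply dvd_mull. apply dvd_refl.
      + exists a. intros y Hy. split.
        * intro H. destruct (proj1 (Ha y Hy) H) as [H1 H2]. split; auto. apply lt_lt_succ_r; auto.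
        * intros [H1 H2]. apply lt_succ_r in H1. destruct H1 as [H1| ->].
          -- apply (proj2 (Ha y Hy)). auto.
          -- exfalso. apply Hk. auto. }
  destruct (Hk (K + 1)) as [a Ha]. exists a, b, K. intro y. split.
  - intros [Hy Hd]. destruct (proj1 (Ha y Hy) Hd). auto.
  - intros [Hy Hx]. split; auto. apply (proj2 (Ha y Hy)). split; auto. apply lt_succ_r; auto. Qed.

Definition cpair (x y : N) := (x + y) * (x + y) + x.

Lemma square_le : forall a b, a <= b -> a * a <= b * b.
Proof. intros a b H. apply le_trans with (b * a). apply mul_le_mono_r; auto.
  apply le_iff in H. apply le_iff. destruct H as [d <-]. exists ((a + d) * d). ring. Qed.

Lemma cpair_lt_square : forall x y, cpair x y < (x + y + 1) * (x + y + 1).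
Proof. intros x y. unfold cpair. apply lt_iff. exists (y + (x + y)). ring. Qed.

Lemma cpair_inj : forall x y x' y', cpair x y = cpair x' y' -> x = x' /\ y = y'.
Proof.
  assert (forall x y x' y', cpair x y = cpair x' y' -> ~ x + y < x' + y') as K.
  { intros x y x' y' E H. apply lt_iff_succ_le in H. apply square_le in H.
    apply (lt_irrefl (cpair x y)). eapply lt_le_trans. apply cpair_lt_square. eapply le_trans. exact H.
    rewrite E. unfold cpair. apply le_add_r. }
  intros x y x' y' E. assert (x + y = x' + y') as Es.
  { destruct (lt_trichotomy (x + y) (x' + y')) as [h|[h|h]]; auto.
    exfalso; exact (K _ _ _ _ E h). exfalso; exact (K _ _ _ _ (eq_sym E) h). }
  unfold cpair in E. rewrite Es in E. apply add_cancel_l in E. subst x'. split; auto.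
  apply add_cancel_l in Es. auto. Qed.

Lemma le_square : forall s, s <= s * s.
Proof. intros s. destruct (zero_or_succ s) as [->|[k ->]]. rewrite mul_0_r. apply le_refl.
  apply le_mul_pos_r. apply lt_0_succ. Qed.

Lemma cpair_ge_l : forall x y, x <= cpair x y.
Proof. intros x y. unfold cpair. apply le_add_l. Qed.
Lemma cpair_ge_r : forall x y, y <= cpair x y.
Proof. intros x y. unfold cpair. eapply le_trans; [|apply le_add_r]. eapply le_trans; [|apply le_square].
  apply le_add_l. Qed.

(** * Recursion along the numbers of the model *)

Definition graph (S : sets A) (j u : N) : Prop := cpair j u ∈ S.
Definition functional (S : sets A) : Prop := forall i w w', graph S i w -> graph S i w' -> w = w'.
Definition beta_rel (a b M j u : N) : Prop := beta_mem a b M (cpair j u).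
Definition agree_below (R R' : N -> N -> Prop) (n : N) : Prop :=
  forall j u, j < n -> (R j u <-> R' j u).

Definition least_choice (th : (N -> N -> Prop) -> N -> N -> Prop) (R : N -> N -> Prop) (n v : N) :=
  (th R n v /\ forall w, w < v -> ~ th R n w) \/ ((forall w, ~ th R n w) /\ v = 0).

Lemma agree_below_sym : forall R R' n, agree_below R R' n -> agree_below R' R n.
Proof. intros R R' n H j u Hj. split; apply H; auto. Qed.

Lemma agree_below_le : forall R R' n i, agree_below R R' n -> i <= n -> agree_below R R' i.
Proof. intros R R' n i H Hi j u Hj. apply H. eapply lt_le_trans; eauto. Qed.

Lemma least_choice_iff : forall th th' R R' n v, (forall w, th R n w <-> th' R' n w) ->
  least_choice th R n v -> least_choice th' R' n v.
Proof. intros th th' R R' n v E [[H1 H2]|[H1 H2]].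
  - left. split. apply E; auto. intros w Hw C. apply (H2 w Hw). apply E; auto.
  - right. split; auto. intros w C. apply (H1 w). apply E; auto. Qed.

Lemma least_choice_unique : forall th R n v v', least_choice th R n v -> least_choice th R n v' -> v = v'.
Proof. intros th R n v v' [[H1 H2]|[H1 H2]] [[G1 G2]|[G1 G2]].
  - destruct (lt_trichotomy v v') as [h|[h|h]]; auto.
    exfalso; exact (G2 v h H1). exfalso; exact (H2 v' h G1).
  - exfalso; exact (G1 v H1).
  - exfalso; exact (H1 v' G1).
  - subst; auto. Qed.

(* A set [P] of codes describes an arithmetical step condition, applied to the history coded by
   [(a, b, M)]; recursion is obtained by gluing the codes of all finite initial runs. *)
Section InitialRuns.
Variable P : sets A.

Definition step_ok (a b M n v : N) : Prop := cpair n (cpair v (cpair a (cpair b M))) ∈ P.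
Definition step_choice (a b M n v : N) : Prop :=
  least_choice (fun _ => step_ok a b M) (beta_rel a b M) n v.
Definition initial_run (n a b M : N) : Prop :=
  (forall i, i < n -> exists w, beta_rel a b M i w /\ step_choice a b M i w) /\
  (forall i w, beta_rel a b M i w -> i < n /\ step_choice a b M i w).

Hypothesis step_ok_ext : forall n v a b M a' b' M',
  agree_below (beta_rel a b M) (beta_rel a' b' M') n -> step_ok a b M n v -> step_ok a' b' M' n v.

Lemma step_choice_ext : forall n v a b M a' b' M', agree_below (beta_rel a b M) (beta_rel a' b' M') n ->
  step_choice a b M n v -> step_choice a' b' M' n v.
Proof. intros n v a b M a' b' M' Hag. apply least_choice_iff. intro w. split; apply step_ok_ext; auto.
  apply agree_below_sym; auto. Qed.

Lemma step_choice_exists : forall n a b M, exists v, step_choice a b M n v.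
Proof. intros n a b M. destruct (classic (exists w, step_ok a b M n w)) as [Hex|Hno].
  - least (fun w => step_ok a b M n w) Hex as [v [Hv Hmin]]. exists v. left. auto.
  - exists 0. right. split; auto. intros w Hw. apply Hno. exists w; auto. Qed.

Lemma initial_runs_agree : forall i n a b M n' a' b' M', initial_run n a b M -> initial_run n' a' b' M' ->
  i < n -> i < n' -> forall w, (beta_rel a b M i w -> beta_rel a' b' M' i w) /\
                              (beta_rel a' b' M' i w -> beta_rel a b M i w).
Proof. strong_induction. intros i IH n a b M n' a' b' M' HG HG' Hi Hi' w.
  pose proof HG as [G1 G2]. pose proof HG' as [G1' G2'].
  assert (Hag : agree_below (beta_rel a b M) (beta_rel a' b' M') i).
  { intros j u Hj. split; apply (IH j Hj n a b M n' a' b' M'); auto; eapply lt_trans; eauto. }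
  destruct (G1 i Hi) as [w0 [Hm0 Hc0]]. destruct (G1' i Hi') as [w1 [Hm1 Hc1]].
  assert (w0 = w1) as <-.
  { eapply least_choice_unique; [|exact Hc1]. eapply step_choice_ext; eauto. }
  split.
  - intro H. destruct (G2 i w H) as [_ Hc]. rewrite (least_choice_unique _ _ _ _ _ Hc Hc0). auto.
  - intro H. destruct (G2' i w H) as [_ Hc]. rewrite (least_choice_unique _ _ _ _ _ Hc Hc1). auto. Qed.

Lemma initial_run_exists : forall n, exists a b M, initial_run n a b M.
Proof. model_induction.
  - assert (exists E, forall y, y ∈ E <-> y <> y) as [E HE] by comprehend.
    destruct (beta_code E 0) as [a [b [M Hc]]]. exists a, b, M. split.
    + intros i Hi. exfalso. exact (nlt_0_r _ Hi).
    + intros i w Hm. apply Hc in Hm. destruct Hm as [_ Hm]. apply HE in Hm. exfalso; auto.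
  - intros n [a [b [M [G1 G2]]]]. destruct (step_choice_exists n a b M) as [v Hv].
    assert (exists X, forall y, y ∈ X <-> (beta_mem a b M y \/ y = cpair n v)) as [X HX] by comprehend.
    destruct (beta_code X (M + cpair n v)) as [a' [b' [M' Hc]]].
    assert (Hag : agree_below (beta_rel a b M) (beta_rel a' b' M') n).
    { intros j u Hj. split.
      - intro H. apply Hc. split. eapply le_trans; [apply H|apply le_add_r]. apply HX; auto.
      - intro H. apply Hc in H. destruct H as [_ H]. apply HX in H. destruct H as [H|H]; auto.
        apply cpair_inj in H. destruct H as [-> _]. exfalso; exact (lt_irrefl _ Hj). }
    exists a', b', M'. split.
    + intros i Hi. apply lt_succ_r in Hi. destruct Hi as [Hi| ->].
      * destruct (G1 i Hi) as [w [Hm Hch]]. exists w. split.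
        -- apply (Hag i w Hi). auto.
        -- eapply step_choice_ext; [|exact Hch]. eapply agree_below_le; eauto. left; auto.
      * exists v. split.
        -- apply Hc. split. apply le_add_l. apply HX. right; auto.
        -- eapply step_choice_ext; eauto.
    + intros i w Hm. apply Hc in Hm. destruct Hm as [_ Hm]. apply HX in Hm. destruct Hm as [Hm|Hm].
      * destruct (G2 i w Hm) as [Hi Hch]. split. apply lt_lt_succ_r; auto.
        eapply step_choice_ext; [|exact Hch]. eapply agree_below_le; eauto. left; auto.
      * apply cpair_inj in Hm. destruct Hm as [-> ->]. split. apply lt_succ_diag_r.
        eapply step_choice_ext; eauto. Qed.

Lemma initial_runs_union : exists S, functional S /\
  forall n, exists a b M, agree_below (beta_rel a b M) (graph S) n /\ forall v, graph S n v <-> step_choice a b M n v.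
Proof.
  assert (exists S, forall t, t ∈ S <-> exists i w m a b M,
            t = cpair i w /\ i < m /\ initial_run m a b M /\ beta_rel a b M i w) as [S HS] by comprehend.
  assert (HS' : forall i w, graph S i w <-> exists m a b M, i < m /\ initial_run m a b M /\ beta_rel a b M i w).
  { intros i w. unfold graph. rewrite HS. split.
    - intros [i' [w' [m [a [b [M [E H]]]]]]]. apply cpair_inj in E. destruct E as [-> ->]. eauto 10.
    - intros [m [a [b [M H]]]]. exists i, w, m, a, b, M. auto. }
  exists S. split.
  - intros i w w' H1 H2. apply HS' in H1. apply HS' in H2.
    destruct H1 as [m [a [b [M [Hi [HG Hm]]]]]]. destruct H2 as [m' [a' [b' [M' [Hi' [HG' Hm']]]]]].
    assert (Hm2 : beta_rel a b M i w') by (apply (initial_runs_agree i m' a' b' M' m a b M); auto).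
    pose proof HG as [_ G2]. destruct (G2 i w Hm) as [_ C1]. destruct (G2 i w' Hm2) as [_ C2].
    eapply least_choice_unique; eauto.
  - intro n. destruct (initial_run_exists (n + 1)) as [a [b [M HG]]]. exists a, b, M.
    pose proof HG as [G1 G2]. split.
    + intros j u Hj. split.
      * intro H. apply HS'. exists (n + 1), a, b, M. split; auto. apply lt_lt_succ_r; auto.
      * intro H. apply HS' in H. destruct H as [m [a' [b' [M' [Hi [HG' Hm]]]]]].
        apply (initial_runs_agree j m a' b' M' (n + 1) a b M); auto. apply lt_lt_succ_r; auto.
    + intro v. split.
      * intro H. apply HS' in H. destruct H as [m [a' [b' [M' [Hi [HG' Hm]]]]]].
        assert (Hm2 : beta_rel a b M n v)
          by (apply (initial_runs_agree n m a' b' M' (n + 1) a b M); auto; apply lt_succ_diag_r).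
        apply (G2 n v Hm2).
      * intro Hc. destruct (G1 n (lt_succ_diag_r n)) as [w [Hm Hc']].
        rewrite (least_choice_unique _ _ _ _ _ Hc Hc'). apply HS'. exists (n + 1), a, b, M.
        split; auto. apply lt_succ_diag_r. Qed.
End InitialRuns.

Lemma least_choice_recursion (th : (N -> N -> Prop) -> N -> N -> Prop) :
  (forall R R' n v, agree_below R R' n -> th R n v -> th R' n v) ->
  (exists P, forall t, t ∈ P <->
     exists n v a b M, t = cpair n (cpair v (cpair a (cpair b M))) /\ th (beta_rel a b M) n v) ->
  exists S, functional S /\ (forall n, exists v, graph S n v) /\
    forall n v, graph S n v <-> least_choice th (graph S) n v.
Proof. intros Hext [P HP].
  assert (HQ : forall n v a b M, step_ok P a b M n v <-> th (beta_rel a b M) n v).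
  { intros n v a b M. unfold step_ok. rewrite HP. split.
    - intros [n' [v' [a' [b' [M' [E H]]]]]].
      apply cpair_inj in E; destruct E as [-> E]. apply cpair_inj in E; destruct E as [-> E].
      apply cpair_inj in E; destruct E as [-> E]. apply cpair_inj in E; destruct E as [-> ->]. auto.
    - intro H. exists n, v, a, b, M. auto. }
  assert (Hok : forall n v a b M a' b' M', agree_below (beta_rel a b M) (beta_rel a' b' M') n ->
            step_ok P a b M n v -> step_ok P a' b' M' n v).
  { intros n v a b M a' b' M' Hag H. apply HQ. apply HQ in H. eapply Hext; eauto. }
  destruct (initial_runs_union P Hok) as [S [HU HS]]. exists S. split; auto. split.
  - intro n. destruct (HS n) as [a [b [M [_ Hv]]]]. destruct (step_choice_exists P n a b M) as [v Hv'].
    exists v. apply Hv. auto.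
  - intros n v. destruct (HS n) as [a [b [M [Hag Hv]]]]. rewrite Hv. split; apply least_choice_iff; intro w.
    + rewrite HQ. split; apply Hext; auto. apply agree_below_sym; auto.
    + rewrite HQ. split; apply Hext; auto. apply agree_below_sym; auto. Qed.

(** * Dense subsets of intervals of the rationals *)

Definition between (a b z : N) : Prop := a <Q z /\ z <Q b.
Definition dense_between (Y : N -> Prop) (a b : N) : Prop :=
  forall u v, between a b u -> between a b v -> u <Q v -> exists z, Y z /\ u <Q z /\ z <Q v.

Lemma between_sub : forall a b a' b' z, between a b a' -> between a b b' -> between a' b' z -> between a b z.
Proof. intros a b a' b' z [H1 H2] [H3 H4] [H5 H6].
  split. exact (ltQ_trans _ _ _ H1 H5). exact (ltQ_trans _ _ _ H6 H4). Qed.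

Lemma dense_between_mono : forall (Y Y' : N -> Prop) a b,
  (forall z, Y z -> Y' z) -> dense_between Y a b -> dense_between Y' a b.
Proof. intros Y Y' a b H D u v Hu Hv Huv. destruct (D u v Hu Hv Huv) as [z [Hz [H1 H2]]]. exists z; auto. Qed.

Lemma dense_between_sub : forall Y u1 v1 u0 v0, (forall z, between u1 v1 z -> between u0 v0 z) ->
  dense_between Y u0 v0 -> dense_between Y u1 v1.
Proof. intros Y u1 v1 u0 v0 Hs D u v Hu Hv Huv. apply D; auto. Qed.

Lemma dense_between_witness : forall Y a b u v, dense_between Y a b -> between a b u -> between a b v ->
  u <Q v -> exists z, Y z /\ between a b z /\ between u v z.
Proof. intros Y a b u v D Hu Hv Huv. destruct (D u v Hu Hv Huv) as [z [Hz [H1 H2]]].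
  exists z. split; auto. split; split; auto.
  exact (ltQ_trans _ _ _ (proj1 Hu) H1). exact (ltQ_trans _ _ _ H2 (proj2 Hv)). Qed.

Lemma between_two_points : forall a b, a <Q b -> exists u v, between a b u /\ between a b v /\ u <Q v.
Proof. intros a b H. destruct (ltQ_dense a b H) as [t1 [H1 H2]].
  destruct (ltQ_dense t1 b H2) as [t2 [H3 H4]]. exists t1, t2.
  split; [split; auto | split; [split; auto; eapply ltQ_trans; eauto | auto]]. Qed.

Lemma dense_between_nonempty : forall Y a b, a <Q b -> dense_between Y a b -> exists z, Y z /\ between a b z.
Proof. intros Y a b H D. destruct (between_two_points a b H) as [u [v [Hu [Hv Huv]]]].
  destruct (dense_between_witness Y a b u v D Hu Hv Huv) as [z [Hz [H1 _]]]. eauto. Qed.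

Lemma ltQ_minimal_below : forall (B : sets A) k, (exists z, z ∈ B /\ z <= k) ->
  exists w, w ∈ B /\ w <= k /\ forall z, z ∈ B -> z <= k -> ~ z <Q w.
Proof. intros B. model_induction.
  - intros [z [Hz Hz0]]. assert (z = 0) as ->.
    { destruct Hz0 as [h|h]; auto. exfalso; exact (nlt_0_r _ h). }
    exists 0. split; auto. split. apply le_refl. intros z Hz' Hle.
    assert (z = 0) as ->. { destruct Hle as [h|h]; auto. exfalso; exact (nlt_0_r _ h). }
    apply ltQ_irrefl.
  - intros k IH [z [Hz Hle]]. destruct (classic (exists z, z ∈ B /\ z <= k)) as [Hex|Hno].
    + destruct (IH Hex) as [w [Hw [Hwk Hmin]]].
      destruct (classic ((k + 1) ∈ B /\ (k + 1) <Q w)) as [[Hk1 Hk2]|Hk].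
      * exists (k + 1). split; auto. split. apply le_refl. intros z' Hz' Hle'.
        destruct Hle' as [h| ->]. apply lt_succ_r in h.
        intro C. apply (Hmin z' Hz' h). eapply ltQ_trans; eauto. apply ltQ_irrefl.
      * exists w. split; auto. split. apply le_trans with k; auto. left; apply lt_succ_diag_r.
        intros z' Hz' Hle'. destruct Hle' as [h| ->]. apply lt_succ_r in h. apply Hmin; auto.
        intro C. apply Hk; auto.
    + exists z. split; auto. assert (z = k + 1) as ->.
      { destruct Hle as [h|h]; auto. apply lt_succ_r in h. exfalso. apply Hno. eauto. }
      split. apply le_refl. intros z' Hz' Hle'. destruct Hle' as [h| ->].
      apply lt_succ_r in h. exfalso. apply Hno. eauto. apply ltQ_irrefl. Qed.

(* If all points of [Y] in (u, v) were at most [k], those right of a fixed one would have a <Q-least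
   element, contradicting density. *)
Lemma dense_between_unbounded : forall (Y : sets A) u v, u <Q v -> dense_between (fun z => z ∈ Y) u v ->
  forall k, exists z, z ∈ Y /\ between u v z /\ k < z.
Proof. intros Y u v Huv D k. apply NNPP. intro Hno.
  assert (Hb : forall z, z ∈ Y -> between u v z -> z <= k).
  { intros z Hz Hi. apply not_lt. intro C. apply Hno. eauto. }
  destruct (dense_between_nonempty _ u v Huv D) as [z1 [Hz1 Hi1]].
  assert (exists B, forall z, z ∈ B <-> (z ∈ Y /\ between u v z /\ z1 <Q z)) as [B HB] by comprehend.
  assert (Hex : exists z, z ∈ B /\ z <= k).
  { destruct Hi1 as [Hi1a Hi1b]. destruct (ltQ_dense z1 v Hi1b) as [t [Ht1 Ht2]].
    assert (Hit : between u v t) by (split; auto; eapply ltQ_trans; eauto).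
    destruct (dense_between_witness _ u v z1 t D (conj Hi1a Hi1b) Hit Ht1) as [z [Hz [Hiz [Hz1z Hzt]]]].
    exists z. split. apply HB. auto. apply Hb; auto. }
  destruct (ltQ_minimal_below B k Hex) as [w [Hw [Hwk Hmin]]]. apply HB in Hw. destruct Hw as [HwY [Hwi Hw1]].
  destruct (dense_between_witness _ u v z1 w D Hi1 Hwi Hw1) as [z [Hz [Hiz [Hz1z Hzw]]]].
  apply (Hmin z). - apply HB. auto. - apply Hb; auto. - exact Hzw. Qed.

(** * Homogeneous sets for a coloring *)

Section Coloring.
Variable F : sets A.

Definition col1 (x y : N) : Prop := color1 A F x y.
Definition col0 (y z : N) : Prop := z <> y /\ ~ col1 y z.

Lemma col1_sym : forall x y, col1 x y -> col1 y x.
Proof. intros x y [H|H]; [right|left]; auto. Qed.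

Definition good_interval (a b : N) (Y : sets A) : Prop :=
  a <Q b /\ dense_between (fun z => z ∈ Y) a b /\
  forall y, y ∈ Y -> between a b y -> forall a' b', between a b a' -> between a b b' -> a' <Q b' ->
    ~ dense_between (fun z => z ∈ Y /\ col0 y z) a' b'.

Section ZeroHomogeneous.

(* Stage [n] of the sequence is [cpair y (cpair a' b')]: a point [y] and the interval (a', b') in
   which stage [n + 1] works; stage 0 works in the interval (1, 0). *)
Definition cur_interval (R : N -> N -> Prop) (n an bn : N) : Prop :=
  (n = 0 /\ an = 1 /\ bn = 0) \/ (exists j u y, n = j + 1 /\ R j u /\ u = cpair y (cpair an bn)).
Definition candidate (R : N -> N -> Prop) (n z : N) : Prop :=
  (exists an bn, cur_interval R n an bn /\ between an bn z) /\
  forall j u y' a2 b2, j < n -> R j u -> u = cpair y' (cpair a2 b2) -> col0 y' z.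
Definition admissible (R : N -> N -> Prop) (n y a' b' : N) : Prop :=
  candidate R n y /\ (exists an bn, cur_interval R n an bn /\ between an bn a' /\ between an bn b') /\
  a' <Q b' /\ dense_between (fun z => candidate R n z /\ col0 y z) a' b'.
(* Taking [y] least makes the points increase, so that the resulting set is unbounded. *)
Definition thin_step (R : N -> N -> Prop) (n v : N) : Prop :=
  exists y a' b', v = cpair y (cpair a' b') /\ admissible R n y a' b' /\
    forall y2, y2 < y -> forall a2 b2, ~ admissible R n y2 a2 b2.

Lemma cur_interval_ext : forall R R' n an bn, agree_below R R' n -> cur_interval R n an bn -> cur_interval R' n an bn.
Proof. intros R R' n an bn Hag [H|[j [u [y [E [HR Eu]]]]]]. left; auto.
  right. exists j, u, y. split; auto. split; auto. apply Hag; auto. rewrite E. apply lt_succ_diag_r. Qed.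

Lemma candidate_ext : forall R R' n z, agree_below R R' n -> candidate R n z -> candidate R' n z.
Proof. intros R R' n z Hag [[an [bn [Hc Hi]]] H2]. split.
  - exists an, bn. split; auto. eapply cur_interval_ext; eauto.
  - intros j u y' a2 b2 Hj HR Eu. eapply H2; eauto. apply Hag; auto. Qed.

Lemma admissible_ext : forall R R' n y a' b', agree_below R R' n -> admissible R n y a' b' -> admissible R' n y a' b'.
Proof. intros R R' n y a' b' Hag [H1 [[an [bn [Hc [Ha Hb]]]] [H3 H4]]]. split; [|split; [|split]].
  - eapply candidate_ext; eauto.
  - exists an, bn. split; auto. eapply cur_interval_ext; eauto.
  - auto.
  - eapply dense_between_mono; [|exact H4]. intros z [Hz1 Hz2]. split; auto. eapply candidate_ext; eauto. Qed.

Lemma thin_step_ext : forall R R' n v, agree_below R R' n -> thin_step R n v -> thin_step R' n v.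
Proof. intros R R' n v Hag [y [a' [b' [E [Hc Hm]]]]]. exists y, a', b'. split; auto. split.
  - eapply admissible_ext; eauto.
  - intros y2 Hy2 a2 b2 C. apply (Hm y2 Hy2 a2 b2). eapply admissible_ext; eauto. apply agree_below_sym; auto. Qed.

Section ThinSequence.
Variable S : sets A.
Hypothesis S_functional : functional S.
Hypothesis S_total : forall n, exists v, graph S n v.
Hypothesis S_choice : forall n v, graph S n v <-> least_choice thin_step (graph S) n v.
Hypothesis no_good_interval : forall a b Y, ~ good_interval a b Y.

Lemma cur_interval_unique : forall n an bn an' bn',
  cur_interval (graph S) n an bn -> cur_interval (graph S) n an' bn' -> an = an' /\ bn = bn'.
Proof. intros n an bn an' bn' [[E1 [-> ->]]|[j [u [y [E1 [H1 ->]]]]]] [[E2 [-> ->]]|[j' [u' [y' [E2 [H2 ->]]]]]].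
  - auto.
  - exfalso. rewrite E1 in E2. exact (succ_neq_0 _ (eq_sym E2)).
  - exfalso. rewrite E1 in E2. exact (succ_neq_0 _ E2).
  - rewrite E1 in E2. apply succ_inj in E2. subst j'. pose proof (S_functional _ _ _ H1 H2) as E.
    apply cpair_inj in E. destruct E as [_ E]. apply cpair_inj in E. auto. Qed.

Lemma thin_step_chosen : forall n an bn, cur_interval (graph S) n an bn -> an <Q bn ->
  dense_between (candidate (graph S) n) an bn ->
  exists y a' b', graph S n (cpair y (cpair a' b')) /\ admissible (graph S) n y a' b' /\
    forall y2, y2 < y -> forall a2 b2, ~ admissible (graph S) n y2 a2 b2.
Proof. intros n an bn Hc Hab HD.
  assert (exists Ys, forall z, z ∈ Ys <-> candidate (graph S) n z) as [Ys HYs] by comprehend.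
  assert (Hex : exists y, exists a' b', admissible (graph S) n y a' b').
  { apply NNPP. intro Hno. apply (no_good_interval an bn Ys). split; [auto | split].
    - eapply dense_between_mono; [|exact HD]. intros z Hz. apply HYs; auto.
    - intros y Hy _ a' b' Ha' Hb' Hab' HD'. apply Hno. exists y, a', b'.
      split; [apply HYs; auto | split; [exists an, bn; auto | split; auto]].
      eapply dense_between_mono; [|exact HD']. intros z [Hz1 Hz2]. split; auto. apply HYs; auto. }
  least (fun y => exists a' b', admissible (graph S) n y a' b') Hex as [y0 [[a0 [b0 Hc0]] Hmin]].
  destruct (S_total n) as [v Hv]. destruct (proj1 (S_choice n v) Hv) as [[Hth _]|[Hno _]].
  - destruct Hth as [y1 [a1 [b1 [-> [Hc1 Hm1]]]]]. exists y1, a1, b1. auto.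
  - exfalso. apply (Hno (cpair y0 (cpair a0 b0))). exists y0, a0, b0. split; auto. split; auto.
    intros y2 Hy2 a2 b2 C. apply (Hmin y2 Hy2). eauto. Qed.

Lemma cur_interval_dense : forall n, exists an bn,
  cur_interval (graph S) n an bn /\ an <Q bn /\ dense_between (candidate (graph S) n) an bn.
Proof. model_induction.
  - exists 1, 0. split. left; auto. split. apply ltQ_1_0.
    intros u v Hu Hv Huv. destruct (ltQ_dense u v Huv) as [z [H1 H2]]. exists z. split; auto.
    split.
    + exists 1, 0. split. left; auto. split.
      exact (ltQ_trans _ _ _ (proj1 Hu) H1). exact (ltQ_trans _ _ _ H2 (proj2 Hv)).
    + intros j u' y' a2 b2 Hj. exfalso; exact (nlt_0_r _ Hj).
  - intros n [an [bn [Hc [Hab HD]]]].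
    destruct (thin_step_chosen n an bn Hc Hab HD) as [y [a' [b' [HS [[HYy [_ [Hab' HD']]] _]]]]].
    assert (Hcur : cur_interval (graph S) (n + 1) a' b').
    { right. exists n, (cpair y (cpair a' b')), y. auto. }
    exists a', b'. split; [|split]; auto.
    intros u v Hu Hv Huv. destruct (dense_between_witness _ a' b' u v HD' Hu Hv Huv) as [z [[Hz1 Hz2] [Hz3 Hz4]]].
    exists z. split; [|exact Hz4]. split.
    + exists a', b'. auto.
    + intros j u' y' a2 b2 Hj HR Eu. apply lt_succ_r in Hj. destruct Hj as [Hj| ->].
      * destruct Hz1 as [_ Hz1]. eapply Hz1; eauto.
      * pose proof (S_functional _ _ _ HR HS) as E. rewrite Eu in E.
        apply cpair_inj in E. destruct E as [-> _]. auto. Qed.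

Lemma thin_stage : forall n, exists y a' b', graph S n (cpair y (cpair a' b')) /\
  admissible (graph S) n y a' b' /\ forall y2, y2 < y -> forall a2 b2, ~ admissible (graph S) n y2 a2 b2.
Proof. intro n. destruct (cur_interval_dense n) as [an [bn [Hc [Hab HD]]]]. eapply thin_step_chosen; eauto. Qed.

Lemma admissible_of_succ : forall n y a' b' z a2 b2, graph S n (cpair y (cpair a' b')) ->
  admissible (graph S) n y a' b' -> admissible (graph S) (n + 1) z a2 b2 -> admissible (graph S) n z a2 b2.
Proof. intros n y a' b' z a2 b2 HS [_ [[an [bn [Hc [Ha' Hb']]]] _]] Hc2.
  assert (Hcur : forall cn dn, cur_interval (graph S) (n + 1) cn dn -> cn = a' /\ dn = b').
  { intros cn dn H. apply (cur_interval_unique (n + 1)); auto. right. exists n, (cpair y (cpair a' b')), y. auto. }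
  assert (Hcand : forall w, candidate (graph S) (n + 1) w -> candidate (graph S) n w).
  { intros w [[cn [dn [Hc' Hi]]] H2]. split.
    - exists an, bn. split; auto. destruct (Hcur cn dn Hc') as [-> ->]. exact (between_sub _ _ _ _ _ Ha' Hb' Hi).
    - intros j u y' a3 b3 Hj. apply H2. apply lt_lt_succ_r; auto. }
  destruct Hc2 as [H1 [[cn [dn [Hc' [Ha2 Hb2]]]] [H3 H4]]]. destruct (Hcur cn dn Hc') as [-> ->].
  split; [|split; [|split]].
  - apply Hcand; auto.
  - exists an, bn. split; auto. split; [exact (between_sub _ _ _ _ _ Ha' Hb' Ha2) | exact (between_sub _ _ _ _ _ Ha' Hb' Hb2)].
  - auto.
  - eapply dense_between_mono; [|exact H4]. intros w [Hw1 Hw2]. split; auto. Qed.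

Lemma thin_points_increasing : forall n y a' b' z a2 b2, graph S n (cpair y (cpair a' b')) ->
  graph S (n + 1) (cpair z (cpair a2 b2)) -> y < z.
Proof. intros n y a' b' z a2 b2 H1 H2.
  destruct (thin_stage n) as [y1 [a1 [b1 [G1 [C1 M1]]]]].
  pose proof (S_functional _ _ _ H1 G1) as E.
  apply cpair_inj in E. destruct E as [<- E]. apply cpair_inj in E. destruct E as [<- <-].
  destruct (thin_stage (n + 1)) as [z1 [c1 [d1 [G2 [C2 M2]]]]].
  pose proof (S_functional _ _ _ H2 G2) as E.
  apply cpair_inj in E. destruct E as [<- E]. apply cpair_inj in E. destruct E as [<- <-].
  assert (Cz : admissible (graph S) n z a2 b2) by (eapply admissible_of_succ; eauto).
  assert (Hle : y <= z). { apply not_lt. intro C. exact (M1 z C a2 b2 Cz). }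
  destruct Hle as [Hle| ->]; auto. exfalso.
  destruct C2 as [[_ HN] _]. destruct (HN n (cpair z (cpair a' b')) z a' b' (lt_succ_diag_r n) H1 eq_refl) as [HN1 _].
  apply HN1. reflexivity. Qed.

Lemma thin_point_ge_index : forall n y a' b', graph S n (cpair y (cpair a' b')) -> n <= y.
Proof. model_induction.
  - intros. apply le_0_l.
  - intros n IH z a2 b2 H2. destruct (thin_stage n) as [y [a' [b' [G1 _]]]].
    apply lt_iff_succ_le. eapply le_lt_trans; [exact (IH y a' b' G1) | eapply thin_points_increasing; eauto]. Qed.

Lemma zero_homogeneous_of_thin_sequence : exists H, infinite_set A H /\ homogeneous A F H false.
Proof.
  assert (exists H, forall z, z ∈ H <-> exists n a' b', graph S n (cpair z (cpair a' b'))) as [H HH] by comprehend.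
  exists H. split.
  - intro k. destruct (thin_stage (k + 1)) as [y [a' [b' [G _]]]]. exists y. split.
    + apply HH. eauto.
    + apply lt_iff_succ_le. eapply thin_point_ge_index; eauto.
  - assert (Hhom : forall n m x y a1 b1 a2 b2, n < m -> graph S n (cpair x (cpair a1 b1)) ->
              graph S m (cpair y (cpair a2 b2)) -> ~ col1 x y).
    { intros n m x y a1 b1 a2 b2 Hnm G1 G2.
      destruct (thin_stage m) as [z [c [d [G [[[_ HN] _] _]]]]].
      pose proof (S_functional _ _ _ G2 G) as E.
      apply cpair_inj in E. destruct E as [<- E]. apply cpair_inj in E. destruct E as [<- <-].
      exact (proj2 (HN n (cpair x (cpair a1 b1)) x a1 b1 Hnm G1 eq_refl)). }
    intros x y Hx Hy Hxy. apply HH in Hx. apply HH in Hy.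
    destruct Hx as [n [a1 [b1 G1]]]. destruct Hy as [m [a2 [b2 G2]]].
    destruct (lt_trichotomy n m) as [h|[<-|h]].
    + exact (Hhom _ _ _ _ _ _ _ _ h G1 G2).
    + exfalso. apply Hxy. pose proof (S_functional _ _ _ G1 G2) as E. apply cpair_inj in E. apply E.
    + intro C. apply (Hhom _ _ _ _ _ _ _ _ h G2 G1). apply col1_sym. exact C. Qed.
End ThinSequence.

Theorem good_interval_exists : ~ (exists H, infinite_set A H /\ homogeneous A F H false) ->
  exists a b Y, good_interval a b Y.
Proof. intros NoH. apply NNPP. intro Hno. apply NoH.
  destruct (least_choice_recursion thin_step thin_step_ext ltac:(comprehend)) as [S [HU [HE HC]]].
  apply (zero_homogeneous_of_thin_sequence S HU HE HC).
  intros a b Y G. apply Hno. eauto. Qed.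
End ZeroHomogeneous.

Section OneHomogeneous.
Variables (a b : N) (Y : sets A).
Hypothesis good : good_interval a b Y.

(* A point chosen at stage [cpair i j + 1] lies between the points of stages [i] and [j]; this makes
   the resulting set dense. *)
Definition dense_step_point (R : N -> N -> Prop) (n z : N) : Prop :=
  z ∈ Y /\ between a b z /\
  (forall i j ui uj, n = cpair i j + 1 -> i < n -> j < n -> R i ui -> R j uj -> ui <Q uj -> between ui uj z) /\
  (forall j u, j < n -> R j u -> z <> u /\ col1 u z).
Definition dense_step (R : N -> N -> Prop) (n v : N) : Prop := dense_step_point R n v /\ n < v.

Lemma dense_step_ext : forall R R' n v, agree_below R R' n -> dense_step R n v -> dense_step R' n v.
Proof. intros R R' n v Hag [[H1 [H2 [H3 H4]]] H5]. split; auto. split; auto. split; auto. split.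
  - intros i j ui uj E Hi Hj Ri Rj Hl. apply (H3 i j ui uj); auto.
    exact (proj2 (Hag i ui Hi) Ri). exact (proj2 (Hag j uj Hj) Rj).
  - intros j u Hj Ru. apply (H4 j u Hj). exact (proj2 (Hag j u Hj) Ru). Qed.

Lemma good_interval_avoid : forall y u v, y ∈ Y -> between a b y -> u <Q v ->
  (forall z, between u v z -> between a b z) ->
  exists u' v', u' <Q v' /\ (forall z, between u' v' z -> between u v z) /\
    forall z, between u' v' z -> z <> y /\ ~ (z ∈ Y /\ col0 y z).
Proof. intros y u v HyY Hyab Huv Hsub. destruct good as [_ [_ Hnd]].
  assert (exists u2 v2, u2 <Q v2 /\ (forall z, between u2 v2 z -> between u v z) /\
            forall z, between u2 v2 z -> z <> y) as [u2 [v2 [Huv2 [Hs2 Hne2]]]].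
  { destruct (classic (between u v y)) as [Hin|Hout].
    - exists u, y. split. apply Hin. split.
      + intros z [Hz1 Hz2]. split; auto. eapply ltQ_trans; eauto. apply Hin.
      + intros z [Hz1 Hz2] ->. exact (ltQ_irrefl _ Hz2).
    - exists u, v. split; auto. split; auto. intros z Hz ->. auto. }
  destruct (between_two_points u2 v2 Huv2) as [t1 [t2 [Ht1 [Ht2 Ht12]]]].
  assert (Hnd' := Hnd y HyY Hyab t1 t2 (Hsub _ (Hs2 _ Ht1)) (Hsub _ (Hs2 _ Ht2)) Ht12).
  assert (exists u4 v4, between t1 t2 u4 /\ between t1 t2 v4 /\ u4 <Q v4 /\
            ~ exists z, (z ∈ Y /\ col0 y z) /\ u4 <Q z /\ z <Q v4) as [u4 [v4 [Hu4 [Hv4 [Huv4 Hno4]]]]].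
  { apply NNPP. intro C. apply Hnd'. intros u5 v5 Hu5 Hv5 Huv5. apply NNPP. intro C2. apply C.
    exists u5, v5. tauto. }
  assert (Hs4 : forall z, between u4 v4 z -> between u2 v2 z).
  { intros z Hz. apply (between_sub u2 v2 t1 t2); auto. apply (between_sub t1 t2 u4 v4); auto. }
  exists u4, v4. split; auto. split.
  - intros z Hz. apply Hs2, Hs4; auto.
  - intros z Hz. split. apply Hne2, Hs4; auto. intro C. apply Hno4. exists z. split; auto. Qed.

Section DenseSequence.
Variable S : sets A.
Hypothesis S_functional : functional S.
Hypothesis S_total : forall n, exists v, graph S n v.
Hypothesis S_choice : forall n v, graph S n v <-> least_choice dense_step (graph S) n v.

Section Stage.
Variable n : N.
Hypothesis earlier_stages : forall m, m < n -> forall v, graph S m v -> dense_step (graph S) m v.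

Lemma stage_interval : exists u0 v0, u0 <Q v0 /\ (forall z, between u0 v0 z -> between a b z) /\
  forall i j ui uj, n = cpair i j + 1 -> i < n -> j < n -> graph S i ui -> graph S j uj -> ui <Q uj ->
    forall z, between u0 v0 z -> between ui uj z.
Proof.
  destruct (classic (exists i j ui uj, n = cpair i j + 1 /\ i < n /\ j < n /\ graph S i ui /\
                       graph S j uj /\ ui <Q uj))
    as [[i0 [j0 [ui0 [uj0 [E0 [Hi0 [Hj0 [Hui0 [Huj0 Hl0]]]]]]]]]|Hnp].
  - exists ui0, uj0. split; auto. split.
    + intros z [Hz1 Hz2]. destruct (earlier_stages i0 Hi0 ui0 Hui0) as [[_ [[Ha1 _] _]] _].
      destruct (earlier_stages j0 Hj0 uj0 Huj0) as [[_ [[_ Hb1] _]] _].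
      split; eapply ltQ_trans; eauto.
    + intros i j ui uj E Hi Hj Hui Huj Hl z Hz. rewrite E0 in E. apply succ_inj in E.
      apply cpair_inj in E. destruct E as [<- <-].
      rewrite (S_functional _ _ _ Hui Hui0), (S_functional _ _ _ Huj Huj0). auto.
  - destruct good as [Hab _]. exists a, b. split; auto. split; auto.
    intros i j ui uj E Hi Hj Hui Huj Hl. exfalso. apply Hnp. exists i, j, ui, uj. tauto. Qed.

Lemma avoid_earlier_points : forall u0 v0, u0 <Q v0 -> (forall z, between u0 v0 z -> between a b z) ->
  forall m, m <= n -> exists u1 v1, u1 <Q v1 /\ (forall z, between u1 v1 z -> between u0 v0 z) /\
    forall k hk z, k < m -> graph S k hk -> between u1 v1 z -> z <> hk /\ ~ (z ∈ Y /\ col0 hk z).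
Proof. intros u0 v0 Huv0 Hsub0. model_induction.
  - intros _. exists u0, v0. split; auto. split; auto. intros k hk z Hk. exfalso; exact (nlt_0_r _ Hk).
  - intros m IHm Hle. assert (Hm : m < n) by (apply lt_iff_succ_le; auto).
    destruct (IHm (lt_le_incl _ _ Hm)) as [u1 [v1 [Huv1 [Hs1 Hav1]]]].
    destruct (S_total m) as [hm Hhm]. destruct (earlier_stages m Hm hm Hhm) as [[HhY [Hhab _]] _].
    destruct (good_interval_avoid hm u1 v1 HhY Hhab Huv1) as [u2 [v2 [Huv2 [Hs2 Hav2]]]].
    { intros z Hz. apply Hsub0, Hs1; auto. }
    exists u2, v2. split; auto. split.
    + intros z Hz. apply Hs1, Hs2; auto.
    + intros k hk z Hk Hhk Hz. apply lt_succ_r in Hk. destruct Hk as [Hk| ->].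
      * apply (Hav1 k hk z Hk Hhk). apply Hs2; auto.
      * rewrite (S_functional _ _ _ Hhk Hhm). apply Hav2; auto. Qed.

Lemma dense_step_exists : exists w, dense_step (graph S) n w.
Proof.
  destruct stage_interval as [u0 [v0 [Huv0 [Hsub0 Hpair]]]].
  destruct (avoid_earlier_points u0 v0 Huv0 Hsub0 n (le_refl n)) as [u1 [v1 [Huv1 [Hs1 Hav1]]]].
  assert (HD1 : dense_between (fun z => z ∈ Y) u1 v1).
  { destruct good as [_ [HD _]]. eapply dense_between_sub; [|exact HD]. intros z Hz. apply Hsub0, Hs1; auto. }
  destruct (dense_between_unbounded Y u1 v1 Huv1 HD1 n) as [z [HzY [Hz1 Hnz]]].
  exists z. split; auto. split; auto. split. apply Hsub0, Hs1; auto. split.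
  - intros i j ui uj E Hi Hj Hui Huj Hl. eapply Hpair; eauto.
  - intros j u Hj Hu. destruct (Hav1 j u z Hj Hu Hz1) as [Hne Hnn]. split; auto.
    apply NNPP. intro C. apply Hnn. split; auto. split; auto. Qed.
End Stage.

Lemma dense_step_chosen : forall n v, graph S n v -> dense_step (graph S) n v.
Proof. strong_induction. intros n IH v Hv.
  destruct (proj1 (S_choice n v) Hv) as [[H _]|[Hno _]]; auto.
  exfalso. destruct (dense_step_exists n IH) as [w Hw]. exact (Hno w Hw). Qed.

Lemma one_homogeneous_dense_of_dense_sequence : exists H, homogeneous A F H true /\ denseQ A H.
Proof.
  assert (exists H, forall z, z ∈ H <-> exists n, graph S n z) as [H HH] by comprehend.
  assert (Hhom : forall n m x y, n < m -> graph S n x -> graph S m y -> col1 x y).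
  { intros n m x y Hnm Hx Hy. destruct (dense_step_chosen m y Hy) as [[_ [_ [_ H4]]] _].
    apply (H4 n x Hnm Hx). }
  exists H. split; [|split].
  - intros x y Hx Hy Hxy. apply HH in Hx. apply HH in Hy. destruct Hx as [n Hx]. destruct Hy as [m Hy].
    destruct (lt_trichotomy n m) as [h|[<-|h]].
    + exact (Hhom _ _ _ _ h Hx Hy).
    + exfalso. apply Hxy. exact (S_functional _ _ _ Hx Hy).
    + apply col1_sym. exact (Hhom _ _ _ _ h Hy Hx).
  - intro k. destruct (S_total k) as [v Hv]. exists v. split. apply HH. eauto.
    exact (proj2 (dense_step_chosen k v Hv)).
  - intros x y Hx Hy Hxy. apply HH in Hx. apply HH in Hy. destruct Hx as [i Hx]. destruct Hy as [j Hy].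
    destruct (S_total (cpair i j + 1)) as [z Hz]. exists z. split. apply HH. eauto.
    destruct (dense_step_chosen _ z Hz) as [[_ [_ [H3 _]]] _].
    apply (H3 i j x y eq_refl); auto.
    + apply lt_succ_r. apply cpair_ge_l.
    + apply lt_succ_r. apply cpair_ge_r. Qed.
End DenseSequence.

Theorem one_homogeneous_dense_of_good_interval : exists H, homogeneous A F H true /\ denseQ A H.
Proof.
  destruct (least_choice_recursion dense_step dense_step_ext ltac:(comprehend)) as [S [HU [HE HC]]].
  exact (one_homogeneous_dense_of_dense_sequence S HU HE HC). Qed.
End OneHomogeneous.

Theorem er22_coloring : (exists H, infinite_set A H /\ homogeneous A F H false) \/
                        (exists H, homogeneous A F H true /\ denseQ A H).
Proof.
  destruct (classic (exists H, infinite_set A H /\ homogeneous A F H false)) as [L|NoH]; [left; auto | right].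
  destruct (good_interval_exists NoH) as [a [b [Y G]]].
  exact (one_homogeneous_dense_of_good_interval a b Y G). Qed.
End Coloring.
End ACA0Model.

Theorem mainTheorem3 : forall A : L2Structure, ACA0_model A -> ER22 A.
Proof. intros A HA F. exact (er22_coloring A HA F F). Qed.
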